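(* Let $k\in\mathbb{Z}$, and let $\chi_i$ be a Dirichlet character modulo $q_i$ ($i=1,2$) induced by the primitive character $\chi_i^*$ of modulus $q_i^*\mid q_i$, with $\chi_1(-1)\chi_2(-1)=(-1)^k$. Then for $z\in\mathbb{H}$ and $\mathrm{Re}(s)>1$, \[ E_{\chi_1,\chi_2}(z,s)=\frac{L(2s,\chi_1^*\chi_2^* )}{L(2s,\chi_1\chi_2)}\sum_{a\mid q_1}\sum_{b\mid q_2}\frac{\mu(a)\chi_1^*(a)\mu(b)\chi_2^*(b)}{(ab)^s}\,E_{\chi_1^*,\chi_2^*}\Big(\frac{aq_2}{bq_2^*}z,s\Big). \]
   Context: For Dirichlet characters $\eta_1,\eta_2$ modulo $r_1,r_2$ with $\eta_1(-1)\eta_2(-1)=(-1)^k$, $z=x+iy\in\mathbb{H}$, $\mathrm{Re}(s)>1$, \[ E_{\eta_1,\eta_2}(z,s)=\frac12\sum_{\substack{c,d\in\mathbb{Z}\\ (c,d)=1}}\frac{(r_2y)^s\eta_1(c)\eta_2(d)}{|cr_2z+d|^{2s}}\Big(\frac{|cr_2z+d|}{cr_2z+d}\Big)^k. \] $\mu$ is the Möbius function and $L(s,\chi)$ the Dirichlet $L$-function (of the possibly imprimitive character $\chi_1\chi_2$). *)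

From Stdlib Require Import Reals ZArith.
From Coquelicot Require Import Coquelicot.
From mathcomp Require prime seq.

Open Scope R_scope.

(* complex power of a positive real: x^s = exp(s log x) *)
Definition cpowR (x : R) (s : C) : C :=
  (exp (Re s * ln x) * cos (Im s * ln x), exp (Re s * ln x) * sin (Im s * ln x)).

Definition cpowZ (u : C) (k : Z) : C :=
  if (0 <=? k)%Z then pow_n u (Z.to_nat k) else Cinv (pow_n u (Z.to_nat (- k))).

Definition dirichlet_char (q : Z) (chi : Z -> C) : Prop :=
  (0 < q)%Z /\ chi 1%Z = RtoC 1 /\
  (forall m n : Z, chi (m * n)%Z = Cmult (chi m) (chi n)) /\
  (forall n : Z, chi (n + q)%Z = chi n) /\
  (forall n : Z, Z.gcd n q <> 1%Z -> chi n = RtoC 0) /\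
  (forall n : Z, Z.gcd n q = 1%Z -> chi n <> RtoC 0).

Definition induced_by (q : Z) (chi : Z -> C) (d : Z) (psi : Z -> C) : Prop :=
  dirichlet_char q chi /\ dirichlet_char d psi /\ Z.divide d q /\
  forall n : Z, chi n = if (Z.gcd n q =? 1)%Z then psi n else RtoC 0.

Definition primitive_char (q : Z) (chi : Z -> C) : Prop :=
  dirichlet_char q chi /\
  forall (d : Z) (psi : Z -> C), (0 < d < q)%Z -> ~ induced_by q chi d psi.

(* Moebius function on positive integers (0 at n <= 0, unused) *)
Definition moebius_nat (n : nat) : Z :=
  if seq.all (fun p => Nat.eqb (prime.logn p n) 1) (prime.primes n)
  then ((-1) ^ Z.of_nat (length (prime.primes n)))%Z else 0%Z.
Definition moebius (n : Z) : Z := if (0 <? n)%Z then moebius_nat (Z.to_nat n) else 0%Z.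

(* Partial sums of the Eisenstein series over the box |c|,|d| <= N *)
Definition eis_term (r2 : Z) (eta1 eta2 : Z -> C) (k : Z) (z s : C) (c d : Z) : C :=
  let w : C := Cplus (Cmult (RtoC (IZR (c * r2))) z) (RtoC (IZR d)) in
  if (Z.gcd c d =? 1)%Z then
    Cmult (Cmult (Cmult (cpowR (IZR r2 * Im z) s) (Cmult (eta1 c) (eta2 d)))
                 (Cinv (cpowR (Cmod w) (Cmult (RtoC 2) s))))
          (cpowZ (Cdiv (RtoC (Cmod w)) w) k)
  else RtoC 0.

Definition eis_partial (r2 : Z) (eta1 eta2 : Z -> C) (k : Z) (z s : C) (N : nat) : C :=
  sum_n (fun i => sum_n (fun j =>
      eis_term r2 eta1 eta2 k z s (Z.of_nat i - Z.of_nat N)%Z (Z.of_nat j - Z.of_nat N)%Z)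
    (2 * N)) (2 * N).

(* E_{eta1,eta2}(z,s), eta2 of modulus r2 *)
Definition Eis (r2 : Z) (eta1 eta2 : Z -> C) (k : Z) (z s : C) : C :=
  Cmult (RtoC (/ 2)) (@lim C_CompleteNormedModule
     (filtermap (eis_partial r2 eta1 eta2 k z s) eventually)).

Definition Lfun (s : C) (f : Z -> C) : C :=
  @lim C_CompleteNormedModule
    (filtermap (fun N => sum_n (fun n =>
        Cmult (f (Z.of_nat (S n))) (Cinv (cpowR (INR (S n)) s))) N) eventually).

Definition divsum (q : Z) (F : Z -> C) : C :=
  sum_n (fun n => let a := Z.of_nat n in
      if ((0 <? a) && (Z.rem q a =? 0))%Z%bool then F a else RtoC 0) (Z.to_nat q).

From Stdlib Require Import Reals ZArith Lra Lia List ListSet Permutation ClassicalEpsilon.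
From Coquelicot Require Import Coquelicot.
From mathcomp Require ssreflect ssrbool ssrnat eqtype seq prime div.
Open Scope R_scope.

(* Let E0 be the Eisenstein series summed over all (c, d) <> (0, 0) instead of coprime pairs.
   For Re s > 1 every series involved converges absolutely, so all rearrangements are
   justified by working with unordered sums over finite sets of indices.
   Writing (c, d) = m (c', d') with m = gcd(c, d) gives
     E0_{chi1,chi2}(z, s) = 2 L(2s, chi1 chi2) E_{chi1,chi2}(z, s).
   On the other hand chi_i(n) = chis_i(n) sum_{a | (n, q_i)} mu(a); expanding both Moebius
   sums and substituting c = a c', d = b d' turns the summand of E0_{chi1,chi2}(z, s) at (c, d)
   into mu(a) chis1(a) mu(b) chis2(b) (ab)^-s times the summand of E0_{chis1,chis2}(z', s)
   at (c', d'), where z' = a q2 z / (b qs2), because c q2 z + d = b (c' qs2 z' + d').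
   Applying the first identity on both sides and dividing by L(2s, chi1 chi2), which is
   nonzero because |L(2s, chi1 chi2) - 1| <= sum_{n >= 2} n^-2 < 1, gives the theorem. *)

(** * Finite and unordered sums *)

Section ListSums.
Context {I : Type}.

Fixpoint sumC (f : I -> C) (l : list I) : C :=
  match l with nil => RtoC 0 | x :: l' => (f x + sumC f l')%C end.
Fixpoint sumR (f : I -> R) (l : list I) : R :=
  match l with nil => 0 | x :: l' => f x + sumR f l' end.

Lemma sumC_app f l1 l2 : sumC f (l1 ++ l2) = (sumC f l1 + sumC f l2)%C.
Proof. induction l1; simpl; [ring | rewrite IHl1; ring]. Qed.
Lemma sumR_app f l1 l2 : sumR f (l1 ++ l2) = sumR f l1 + sumR f l2.
Proof. induction l1; simpl; [ring | rewrite IHl1; ring]. Qed.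

Lemma sumC_perm f l l' : Permutation l l' -> sumC f l = sumC f l'.
Proof. induction 1; simpl; congruence || ring. Qed.
Lemma sumR_perm f l l' : Permutation l l' -> sumR f l = sumR f l'.
Proof. induction 1; simpl; congruence || ring. Qed.

Lemma sumC_eq_in f g l : (forall x, In x l -> f x = g x) -> sumC f l = sumC g l.
Proof. induction l; simpl; intros H; auto. rewrite H, IHl; auto. Qed.
Lemma sumR_eq_in f g l : (forall x, In x l -> f x = g x) -> sumR f l = sumR g l.
Proof. induction l; simpl; intros H; auto. rewrite H, IHl; auto. Qed.

Lemma sumC_add f g l : sumC (fun x => f x + g x)%C l = (sumC f l + sumC g l)%C.
Proof. induction l; simpl; [ring | rewrite IHl; ring]. Qed.
Lemma sumC_scal c f l : sumC (fun x => c * f x)%C l = (c * sumC f l)%C.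
Proof. induction l; simpl; [ring | rewrite IHl; ring]. Qed.
Lemma sumR_scal c f l : sumR (fun x => c * f x) l = c * sumR f l.
Proof. induction l; simpl; [ring | rewrite IHl; ring]. Qed.

Lemma sumC_eq0 f l : (forall x, In x l -> f x = RtoC 0) -> sumC f l = RtoC 0.
Proof. induction l; simpl; intros H; auto. rewrite H, IHl; auto. ring. Qed.
Lemma sumR_eq0 f l : (forall x, In x l -> f x = 0) -> sumR f l = 0.
Proof. induction l; simpl; intros H; auto. rewrite H, IHl; auto. ring. Qed.

Lemma sumR_ge0 f l : (forall x, 0 <= f x) -> 0 <= sumR f l.
Proof. intros H; induction l; simpl; [lra | specialize (H a); lra]. Qed.
Lemma sumR_le f g l : (forall x, f x <= g x) -> sumR f l <= sumR g l.
Proof. intros H; induction l; simpl; [lra | specialize (H a); lra]. Qed.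
Lemma sumR_ge_term f l x : (forall y, 0 <= f y) -> In x l -> f x <= sumR f l.
Proof.
  intros Hf; induction l as [|a l IH]; simpl; [contradiction|]. intros [<-|Hx].
  - pose proof (sumR_ge0 f l Hf); lra.
  - pose proof (Hf a); specialize (IH Hx); lra.
Qed.

Lemma Cmod_sumC_le f l : Cmod (sumC f l) <= sumR (fun x => Cmod (f x)) l.
Proof.
  induction l; simpl; [rewrite Cmod_0; lra|].
  eapply Rle_trans; [apply Cmod_triangle | lra].
Qed.

Lemma sumC_RtoC f l : sumC (fun x => RtoC (f x)) l = RtoC (sumR f l).
Proof. induction l; simpl; auto. rewrite IHl, RtoC_plus; auto. Qed.

Lemma sumR_filter f (p : I -> bool) l :
  sumR f l = sumR f (filter p l) + sumR f (filter (fun x => negb (p x)) l).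
Proof. induction l; simpl; [ring | destruct (p a); simpl; rewrite IHl; ring]. Qed.

Lemma sumC_filter_support f (p : I -> bool) l :
  (forall x, In x l -> p x = false -> f x = RtoC 0) -> sumC f l = sumC f (filter p l).
Proof.
  induction l; simpl; intros H; auto.
  destruct (p a) eqn:E; simpl; rewrite IHl; auto. rewrite H; auto. ring.
Qed.

End ListSums.

Lemma sumC_map {I J} (f : I -> C) (h : J -> I) l : sumC f (map h l) = sumC (fun x => f (h x)) l.
Proof. induction l; simpl; auto. rewrite IHl; auto. Qed.
Lemma sumR_map {I J} (f : I -> R) (h : J -> I) l : sumR f (map h l) = sumR (fun x => f (h x)) l.
Proof. induction l; simpl; auto. rewrite IHl; auto. Qed.

Lemma sumC_list_prod {A B} (f : A * B -> C) l1 l2 :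
  sumC f (list_prod l1 l2) = sumC (fun x => sumC (fun y => f (x, y)) l2) l1.
Proof. induction l1; simpl; auto. rewrite sumC_app, IHl1, sumC_map; auto. Qed.
Lemma sumR_list_prod {A B} (f : A * B -> R) l1 l2 :
  sumR f (list_prod l1 l2) = sumR (fun x => sumR (fun y => f (x, y)) l2) l1.
Proof. induction l1; simpl; auto. rewrite sumR_app, IHl1, sumR_map; auto. Qed.

Lemma NoDup_list_prod {A B} (l1 : list A) (l2 : list B) :
  NoDup l1 -> NoDup l2 -> NoDup (list_prod l1 l2).
Proof.
  intros H1 H2. induction H1; simpl; [constructor|].
  apply NoDup_app; auto.
  - apply NoDup_map_NoDup_ForallPairs; auto. intros a b _ _ E; congruence.
  - intros p Hp Hq. apply in_map_iff in Hp as [y [<- _]]. apply in_prod_iff in Hq. tauto.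
Qed.

Definition eq_dec_classic {A : Type} (x y : A) : {x = y} + {x <> y} :=
  excluded_middle_informative (x = y).

Definition list_union {A : Type} (l l' : list A) : list A := nodup eq_dec_classic (l ++ l').

Lemma list_union_spec {A : Type} (l l' : list A) :
  NoDup (list_union l l') /\ incl l (list_union l l') /\ incl l' (list_union l l').
Proof.
  unfold list_union. repeat split; [apply NoDup_nodup | |];
  intros x Hx; apply nodup_In, in_or_app; auto.
Qed.

Lemma Permutation_set_diff {A : Type} (l0 l : list A) : NoDup l0 -> NoDup l -> incl l0 l ->
  Permutation l (l0 ++ set_diff eq_dec_classic l l0).
Proof.
  intros H0 H Hi. apply NoDup_Permutation; auto.
  - apply NoDup_app; auto using set_diff_nodup.
    intros x Hx Hd. apply set_diff_iff in Hd. tauto.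
  - intros x. rewrite in_app_iff, set_diff_iff. split; [tauto|].
    intros [Hx|[Hx _]]; auto.
Qed.

Definition has_sum {I} (f : I -> C) (S : C) := forall eps, 0 < eps -> exists l0 : list I,
  forall l, NoDup l -> incl l0 l -> Cmod (sumC f l - S)%C <= eps.
Definition summable {I} (f : I -> C) :=
  exists M, forall l, NoDup l -> sumR (fun x => Cmod (f x)) l <= M.

Lemma Cmod_sub_triangle (a b c : C) : Cmod (a - c)%C <= Cmod (a - b)%C + Cmod (b - c)%C.
Proof. replace (a - c)%C with ((a - b) + (b - c))%C by ring. apply Cmod_triangle. Qed.
Lemma Cmod_sub_sym (a b : C) : Cmod (a - b)%C = Cmod (b - a)%C.
Proof. replace (a - b)%C with (- (b - a))%C by ring. apply Cmod_opp. Qed.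

Lemma eq_of_Cmod_sub_le (x y : C) : (forall eps, 0 < eps -> Cmod (x - y)%C <= eps) -> x = y.
Proof.
  intros H. apply Ceq_minus, Cmod_eq_0.
  destruct (Cmod_ge_0 (x - y)%C) as [Hlt|]; auto.
  specialize (H (Cmod (x - y)%C / 2)). lra.
Qed.

Section UnorderedSums.
Context {I : Type}.
Implicit Types (f g : I -> C) (l : list I).

Lemma sumC_incl f l0 l : NoDup l0 -> NoDup l -> incl l0 l ->
  sumC f l = (sumC f l0 + sumC f (set_diff eq_dec_classic l l0))%C.
Proof. intros. rewrite <- sumC_app. apply sumC_perm, Permutation_set_diff; auto. Qed.

Lemma sumR_incl_le (f : I -> R) l0 l : (forall x, 0 <= f x) -> NoDup l0 -> NoDup l -> incl l0 l ->
  sumR f l0 <= sumR f l.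
Proof.
  intros Hf H0 H Hi. rewrite (sumR_perm f _ _ (Permutation_set_diff l0 l H0 H Hi)), sumR_app.
  pose proof (sumR_ge0 f (set_diff eq_dec_classic l l0) Hf). lra.
Qed.

Lemma has_sum_unique f S T : has_sum f S -> has_sum f T -> S = T.
Proof.
  intros HS HT. apply eq_of_Cmod_sub_le. intros eps He.
  destruct (HS (eps/2)) as [l1 H1]; [lra|]. destruct (HT (eps/2)) as [l2 H2]; [lra|].
  destruct (list_union_spec l1 l2) as [Hn [i1 i2]].
  specialize (H1 _ Hn i1). specialize (H2 _ Hn i2).
  eapply Rle_trans; [apply (Cmod_sub_triangle _ (sumC f (list_union l1 l2)))|].
  rewrite Cmod_sub_sym. lra.
Qed.

Lemma has_sum_ext f g S : (forall x, f x = g x) -> has_sum f S -> has_sum g S.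
Proof.
  intros E H eps He. destruct (H eps He) as [l0 Hl]. exists l0. intros l H1 H2.
  rewrite (sumC_eq_in g f) by auto. auto.
Qed.

Lemma has_sum_0 : has_sum (fun _ : I => RtoC 0) (RtoC 0).
Proof.
  intros eps He. exists nil. intros l _ _. rewrite sumC_eq0 by auto.
  replace (0 - 0)%C with (RtoC 0) by ring. rewrite Cmod_0. lra.
Qed.

Lemma has_sum_add f g S T :
  has_sum f S -> has_sum g T -> has_sum (fun x => (f x + g x)%C) (S + T)%C.
Proof.
  intros Hf Hg eps He.
  destruct (Hf (eps/2)) as [l1 H1]; [lra|]. destruct (Hg (eps/2)) as [l2 H2]; [lra|].
  exists (l1 ++ l2). intros l Hl Hi. apply incl_app_inv in Hi as [i1 i2].
  rewrite sumC_add.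
  replace (sumC f l + sumC g l - (S + T))%C with ((sumC f l - S) + (sumC g l - T))%C by ring.
  eapply Rle_trans; [apply Cmod_triangle|].
  specialize (H1 l Hl i1). specialize (H2 l Hl i2). lra.
Qed.

Lemma has_sum_scal f c S : has_sum f S -> has_sum (fun x => (c * f x)%C) (c * S)%C.
Proof.
  intros Hf eps He. pose proof (Cmod_ge_0 c).
  destruct (Hf (eps / (Cmod c + 1))) as [l0 H0]; [apply Rdiv_lt_0_compat; lra|].
  exists l0. intros l Hl Hi. specialize (H0 l Hl Hi).
  rewrite sumC_scal. replace (c * sumC f l - c * S)%C with (c * (sumC f l - S))%C by ring.
  rewrite Cmod_mult.
  apply Rle_trans with (Cmod c * (eps / (Cmod c + 1))).
  - apply Rmult_le_compat_l; auto.
  - apply Rmult_le_reg_r with (Cmod c + 1); [lra|].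
    field_simplify; [nra | lra].
Qed.

Lemma summable_le f g c : (forall x, Cmod (f x) <= c * Cmod (g x)) -> summable g -> summable f.
Proof.
  intros H [M HM]. exists (Rabs c * M). intros l Hl.
  apply Rle_trans with (sumR (fun x => Rabs c * Cmod (g x)) l).
  - apply sumR_le. intros x. eapply Rle_trans; [apply H|].
    apply Rmult_le_compat_r; [apply Cmod_ge_0 | apply Rle_abs].
  - rewrite sumR_scal. apply Rmult_le_compat_l; auto. apply Rabs_pos.
Qed.

Lemma summable_tail f : summable f -> forall eps, 0 < eps -> exists l0, NoDup l0 /\
  forall l, NoDup l -> (forall x, In x l -> ~ In x l0) -> sumR (fun x => Cmod (f x)) l <= eps.
Proof.
  intros [M HM] eps He.
  set (E := fun r => exists l, NoDup l /\ r = sumR (fun x => Cmod (f x)) l).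
  destruct (completeness E) as [m [Hub Hlub]].
  { exists M. intros r [l [Hl ->]]. auto. }
  { exists 0, nil. split; [constructor | reflexivity]. }
  destruct (classic (exists l0, NoDup l0 /\ m - eps < sumR (fun x => Cmod (f x)) l0))
    as [[l0 [Hl0 Hlt]]|Hno].
  - exists l0; split; auto. intros l Hl Hdis.
    assert (Hnd : NoDup (l0 ++ l)).
    { apply NoDup_app; auto. intros a Ha Hb. exact (Hdis a Hb Ha). }
    assert (sumR (fun x => Cmod (f x)) (l0 ++ l) <= m) by (apply Hub; exists (l0 ++ l); auto).
    rewrite sumR_app in H. lra.
  - enough (m <= m - eps) by lra. apply Hlub. intros r [l [Hl ->]].
    destruct (Rle_dec (sumR (fun x => Cmod (f x)) l) (m - eps)); auto.
    exfalso; apply Hno; exists l; split; auto; lra.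
Qed.

Definition eventually_finite (P : list I -> Prop) : Prop :=
  exists l0, forall l, NoDup l -> incl l0 l -> P l.

Lemma eventually_finite_proper : ProperFilter eventually_finite.
Proof.
  split.
  - intros P [l0 H]. exists (nodup eq_dec_classic l0). apply H; [apply NoDup_nodup|].
    intros x Hx. apply nodup_In; auto.
  - split.
    + exists nil. auto.
    + intros P Q [l1 H1] [l2 H2]. exists (list_union l1 l2).
      intros l Hl Hi. destruct (list_union_spec l1 l2) as [_ [i1 i2]].
      split; [apply H1 | apply H2]; auto; eapply incl_tran; eauto.
    + intros P Q HPQ [l0 H]. exists l0. auto.
Qed.

(* Absolute summability makes the finite partial sums a Cauchy filter, which converges
   because C is complete. *)
Lemma summable_has_sum f : summable f -> exists S, has_sum f S.
Proof.
  intros Hs.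
  pose (F := filtermap (sumC f) eventually_finite).
  assert (FF : ProperFilter F)
    by (apply filtermap_proper_filter, eventually_finite_proper).
  assert (HF : cauchy F).
  { intros eps. destruct (summable_tail f Hs (eps / 2)) as [l0 [H0 Ht]];
      [destruct eps; simpl; lra|].
    exists (sumC f l0), l0. intros l Hl Hi.
    apply (@norm_compat1 C_AbsRing C_NormedModule). change (Cmod (sumC f l - sumC f l0)%C < eps).
    rewrite (sumC_incl f l0 l) by auto.
    replace (sumC f l0 + _ - sumC f l0)%C with (sumC f (set_diff eq_dec_classic l l0)) by ring.
    eapply Rle_lt_trans; [apply Cmod_sumC_le|].
    eapply Rle_lt_trans; [apply Ht|destruct eps; simpl; lra].
    - apply set_diff_nodup; auto.
    - intros x Hx. apply set_diff_iff in Hx. tauto. }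
  exists (@lim C_CompleteNormedModule F). intros eps He.
  pose proof (@norm_factor_gt_0 C_AbsRing C_NormedModule) as Hnf.
  destruct (@complete_cauchy C_CompleteNormedModule F FF HF
    (mkposreal _ (Rdiv_lt_0_compat _ _ He Hnf))) as [l0 H0].
  exists l0. intros l Hl Hi. specialize (H0 l Hl Hi).
  apply (@norm_compat2 C_AbsRing C_NormedModule) in H0. simpl in H0.
  set (nf := @norm_factor C_AbsRing C_NormedModule) in *.
  change (Cmod (sumC f l - @lim C_CompleteNormedModule F)%C < nf * (eps / nf)) in H0.
  field_simplify in H0; lra.
Qed.

End UnorderedSums.

Lemma has_sum_sumC {I J} (F : J -> I -> C) (V : J -> C) l :
  (forall j, In j l -> has_sum (F j) (V j)) ->
  has_sum (fun x => sumC (fun j => F j x) l) (sumC V l).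
Proof. induction l; simpl; intros H; [apply has_sum_0 | apply has_sum_add; auto]. Qed.

Definition support_of {I} (f : I -> C) (l : list I) : list I :=
  filter (fun x => if Ceq_dec (f x) (RtoC 0) then false else true) l.

Section Support.
Context {I : Type}.
Implicit Types (f : I -> C).

Lemma In_support_of f l x : In x (support_of f l) <-> In x l /\ f x <> RtoC 0.
Proof. unfold support_of. rewrite filter_In. destruct (Ceq_dec (f x) 0); intuition congruence. Qed.

Lemma sumC_support_of f l : sumC f (support_of f l) = sumC f l.
Proof. symmetry. apply sumC_filter_support. intros x _. destruct Ceq_dec; congruence. Qed.

Lemma sumR_Cmod_support_of f l :
  sumR (fun x => Cmod (f x)) (support_of f l) = sumR (fun x => Cmod (f x)) l.
Proof.
  induction l as [|a l IH]; simpl; auto.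
  destruct (Ceq_dec (f a) 0) as [E|]; simpl; rewrite IH; auto. rewrite E, Cmod_0. ring.
Qed.

Lemma NoDup_map_support_of {J} f (g : J -> I) (h : I -> J) l :
  (forall i, f i <> RtoC 0 -> g (h i) = i) -> NoDup l -> NoDup (map h (support_of f l)).
Proof.
  intros Hgh Hl. apply NoDup_map_NoDup_ForallPairs; [|apply NoDup_filter; auto].
  intros x y Hx Hy E. apply In_support_of in Hx, Hy.
  rewrite <- (Hgh x), <- (Hgh y), E by tauto. reflexivity.
Qed.

Lemma has_sum_supported f S : has_sum f S -> forall eps, 0 < eps -> exists l0,
  (forall x, In x l0 -> f x <> RtoC 0) /\
  forall l, NoDup l -> incl l0 l -> Cmod (sumC f l - S)%C <= eps.
Proof.
  intros H eps He. destruct (H eps He) as [l1 H1]. exists (support_of f l1). split.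
  - intros x Hx. apply In_support_of in Hx. tauto.
  - intros l Hl Hi. destruct (list_union_spec l l1) as [Hn [il i1]].
    specialize (H1 _ Hn i1).
    rewrite (sumC_incl f l _ Hl Hn il), (sumC_eq0 f (set_diff _ _ l)) in H1.
    + replace (sumC f l + 0)%C with (sumC f l) in H1 by ring. exact H1.
    + intros x Hx. apply set_diff_iff in Hx as [Hx Hxl].
      apply nodup_In, in_app_or in Hx as [Hx|Hx]; [contradiction|].
      destruct (Ceq_dec (f x) 0) as [|Hfx]; auto.
      exfalso. apply Hxl, Hi, In_support_of. auto.
Qed.

End Support.

Lemma Cmod_mul_sub_le (x y A B : C) d : 0 <= d <= 1 ->
  Cmod (x - A)%C <= d -> Cmod (y - B)%C <= d -> Cmod (x * y - A * B)%C <= d * (Cmod A + Cmod B + 1).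
Proof.
  intros Hd Hx Hy.
  replace (x * y - A * B)%C with (x * (y - B) + B * (x - A))%C by ring.
  eapply Rle_trans; [apply Cmod_triangle|]. rewrite !Cmod_mult.
  assert (Cmod x <= Cmod A + d).
  { replace x with (A + (x - A))%C by ring. eapply Rle_trans; [apply Cmod_triangle | lra]. }
  pose proof (Cmod_ge_0 x). pose proof (Cmod_ge_0 B).
  pose proof (Cmod_ge_0 (y - B)%C). pose proof (Cmod_ge_0 (x - A)%C).
  apply Rle_trans with ((Cmod A + d) * d + Cmod B * d); [|nra].
  apply Rplus_le_compat; apply Rmult_le_compat; auto; lra.
Qed.

Section TwoIndexTypes.
Context {I J : Type}.
Implicit Types (f : I -> C) (F : J -> C).

Lemma has_sum_reindex F f (g : J -> I) (h : I -> J) S :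
  (forall j, F j <> RtoC 0 -> h (g j) = j /\ f (g j) = F j) ->
  (forall i, f i <> RtoC 0 -> g (h i) = i /\ F (h i) = f i) ->
  has_sum F S -> has_sum f S.
Proof.
  intros HF Hf HS eps He. destruct (has_sum_supported F S HS eps He) as [l0 [Hl0 H0]].
  exists (map g l0). intros l Hl Hi.
  rewrite <- sumC_support_of.
  replace (sumC f (support_of f l)) with (sumC F (map h (support_of f l))).
  2:{ rewrite sumC_map. apply sumC_eq_in. intros x Hx. apply In_support_of in Hx. apply Hf; tauto. }
  apply H0.
  - apply NoDup_map_support_of with g; auto. intros i Hi'. apply Hf; auto.
  - intros j Hj. destruct (HF j (Hl0 j Hj)) as [E1 E2].
    apply in_map_iff. exists (g j). split; auto. apply In_support_of. split.
    + apply Hi, in_map; auto.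
    + rewrite E2. auto.
Qed.

Lemma summable_reindex F f (g : J -> I) (h : I -> J) :
  (forall i, f i <> RtoC 0 -> g (h i) = i /\ F (h i) = f i) -> summable F -> summable f.
Proof.
  intros Hf [M HM]. exists M. intros l Hl. rewrite <- sumR_Cmod_support_of.
  replace (sumR _ (support_of f l)) with (sumR (fun x => Cmod (F x)) (map h (support_of f l))).
  - apply HM, NoDup_map_support_of with g; auto. intros i Hi. apply Hf; auto.
  - rewrite sumR_map. apply sumR_eq_in. intros x Hx. apply In_support_of in Hx.
    f_equal. apply Hf; tauto.
Qed.

Lemma summable_prod (a : I -> C) (b : J -> C) : summable a -> summable b ->
  summable (fun p => (a (fst p) * b (snd p))%C).
Proof.
  intros [Ma HMa] [Mb HMb]. exists (Ma * Mb). intros l Hl.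
  set (L1 := nodup eq_dec_classic (map fst l)). set (L2 := nodup eq_dec_classic (map snd l)).
  apply Rle_trans with (sumR (fun p => Cmod (a (fst p) * b (snd p))%C) (list_prod L1 L2)).
  { apply sumR_incl_le; auto.
    - intros; apply Cmod_ge_0.
    - apply NoDup_list_prod; apply NoDup_nodup.
    - intros [x y] Hxy. apply in_prod_iff.
      split; apply nodup_In, in_map_iff; exists (x, y); auto. }
  rewrite sumR_list_prod.
  assert (HA := HMa L1 (NoDup_nodup _ _)). assert (HB := HMb L2 (NoDup_nodup _ _)).
  rewrite (sumR_eq_in _ (fun x => Cmod (a x) * sumR (fun y => Cmod (b y)) L2)).
  2:{ intros x _. simpl. rewrite <- sumR_scal. apply sumR_eq_in. intros. apply Cmod_mult. }
  rewrite (sumR_eq_in _ (fun x => sumR (fun y => Cmod (b y)) L2 * Cmod (a x))) by (intros; ring).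
  rewrite sumR_scal.
  assert (0 <= sumR (fun x => Cmod (a x)) L1) by (apply sumR_ge0; intros; apply Cmod_ge_0).
  assert (0 <= sumR (fun y => Cmod (b y)) L2) by (apply sumR_ge0; intros; apply Cmod_ge_0).
  rewrite Rmult_comm. apply Rmult_le_compat; auto.
Qed.

Lemma has_sum_prod (a : I -> C) (b : J -> C) A B : summable a -> summable b ->
  has_sum a A -> has_sum b B -> has_sum (fun p => (a (fst p) * b (snd p))%C) (A * B)%C.
Proof.
  intros Sa Sb HA HB.
  destruct (summable_has_sum _ (summable_prod a b Sa Sb)) as [S HS].
  replace (A * B)%C with S; auto.
  apply eq_of_Cmod_sub_le. intros eps He.
  set (K := Cmod A + Cmod B + 2).
  assert (HK : 0 < K) by (unfold K; pose proof (Cmod_ge_0 A); pose proof (Cmod_ge_0 B); lra).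
  set (d := Rmin 1 (eps / K)).
  assert (Hd : 0 < d) by (apply Rmin_glb_lt; [lra | apply Rdiv_lt_0_compat; auto]).
  assert (Hd1 : d <= 1) by apply Rmin_l. assert (Hd2 : d <= eps / K) by apply Rmin_r.
  destruct (HS d Hd) as [l0 H0]. destruct (HA d Hd) as [l1 H1]. destruct (HB d Hd) as [l2 H2].
  destruct (list_union_spec l1 (map fst l0)) as [N1 [i1 i1']].
  destruct (list_union_spec l2 (map snd l0)) as [N2 [i2 i2']].
  set (L1 := list_union l1 (map fst l0)) in *. set (L2 := list_union l2 (map snd l0)) in *.
  specialize (H0 (list_prod L1 L2) (NoDup_list_prod _ _ N1 N2)).
  specialize (H1 L1 N1 i1). specialize (H2 L2 N2 i2).
  rewrite sumC_list_prod in H0.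
  rewrite (sumC_eq_in _ (fun x => a x * sumC b L2)%C) in H0
    by (intros x _; simpl; rewrite <- sumC_scal; reflexivity).
  rewrite (sumC_eq_in _ (fun x => sumC b L2 * a x)%C), sumC_scal in H0 by (intros; ring).
  assert (E0 : Cmod (sumC b L2 * sumC a L1 - S)%C <= d).
  { apply H0. intros [x y] Hxy. apply in_prod_iff.
    split; [apply i1' | apply i2']; apply in_map_iff; exists (x, y); auto. }
  pose proof (Cmod_mul_sub_le _ _ A B d ltac:(lra) H1 H2).
  rewrite (Cmult_comm (sumC a L1)) in H.
  eapply Rle_trans; [apply (Cmod_sub_triangle _ (sumC b L2 * sumC a L1)%C)|].
  rewrite Cmod_sub_sym.
  apply Rle_trans with (d * K); [unfold K; lra|].
  apply Rle_trans with (eps / K * K); [apply Rmult_le_compat_r; lra|].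
  field_simplify; lra.
Qed.

End TwoIndexTypes.

(** * The limits defining [Eis] and [Lfun] *)

Lemma lim_eventually_C (u : nat -> C) S :
  filterlim u eventually (locally S) -> @lim C_CompleteNormedModule (filtermap u eventually) = S.
Proof.
  intros Hu. set (F := filtermap u eventually).
  assert (FF : ProperFilter F) by (apply filtermap_proper_filter, eventually_filter).
  assert (HF : cauchy F) by (intros eps; exists S; apply Hu, locally_ball).
  apply (@is_filter_lim_unique C_AbsRing C_NormedModule F);
    [apply Proper_StrongProper; auto | | exact Hu].
  intros P [eps HP].
  eapply filter_imp; [exact HP | apply (@complete_cauchy C_CompleteNormedModule); auto].
Qed.

Lemma filterlim_of_Cmod_le (u : nat -> C) S :
  (forall eps, 0 < eps -> exists N, forall n, (N <= n)%nat -> Cmod (u n - S)%C <= eps) ->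
  filterlim u eventually (locally S).
Proof.
  intros H. apply (proj2 (@filterlim_locally_ball_norm C_AbsRing _ C_NormedModule _ _ u S)).
  intros [eps He].
  destruct (H (eps / 2)) as [N HN]; [simpl; lra|]. exists N. intros n Hn.
  change (Cmod (u n - S)%C < eps). specialize (HN n Hn). simpl in *. lra.
Qed.

Lemma In_le_list_max (l : list nat) x : In x l -> (x <= list_max l)%nat.
Proof.
  intros Hx. assert (H := proj1 (list_max_le l (list_max l)) (le_n _)).
  rewrite Forall_forall in H. auto.
Qed.

Lemma sum_n_sumC (u : nat -> C) N : sum_n u N = sumC u (seq 0 (S N)).
Proof.
  induction N; [rewrite sum_O; simpl; ring|].
  rewrite sum_Sn, IHN, (seq_S (S N)), sumC_app. simpl. change (plus ?a ?b) with (a + b)%C. ring.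
Qed.

Definition dirichlet_term (f : Z -> C) (s : C) (n : nat) : C :=
  (f (Z.of_nat (S n)) * / cpowR (INR (S n)) s)%C.

Lemma Lfun_of_has_sum s (f : Z -> C) L : has_sum (dirichlet_term f s) L -> Lfun s f = L.
Proof.
  intros H. apply lim_eventually_C, filterlim_of_Cmod_le. intros eps He.
  destruct (H eps He) as [l0 H0]. exists (list_max l0). intros n Hn.
  rewrite sum_n_sumC. apply H0; [apply seq_NoDup|].
  intros x Hx. apply in_seq. pose proof (In_le_list_max l0 x Hx). lia.
Qed.

Definition Zbox (N : nat) : list Z := map (fun i => (Z.of_nat i - Z.of_nat N)%Z) (seq 0 (S (2 * N))).

Lemma In_Zbox N c : In c (Zbox N) <-> (- Z.of_nat N <= c <= Z.of_nat N)%Z.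
Proof.
  unfold Zbox. rewrite in_map_iff. split.
  - intros [i [<- Hi]]. apply in_seq in Hi. lia.
  - intros Hc. exists (Z.to_nat (c + Z.of_nat N)). split; [lia | apply in_seq; lia].
Qed.

Lemma NoDup_Zbox N : NoDup (Zbox N).
Proof. apply NoDup_map_NoDup_ForallPairs; [intros x y _ _; lia | apply seq_NoDup]. Qed.

Lemma eis_partial_sumC r2 e1 e2 k z s N :
  eis_partial r2 e1 e2 k z s N =
  sumC (fun p => eis_term r2 e1 e2 k z s (fst p) (snd p)) (list_prod (Zbox N) (Zbox N)).
Proof.
  unfold eis_partial, Zbox. rewrite sumC_list_prod, sumC_map, sum_n_sumC.
  apply sumC_eq_in. intros i _. rewrite sum_n_sumC, sumC_map. reflexivity.
Qed.

Lemma Eis_of_has_sum r2 e1 e2 k z s S :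
  has_sum (fun p => eis_term r2 e1 e2 k z s (fst p) (snd p)) S ->
  Eis r2 e1 e2 k z s = (RtoC (/ 2)%R * S)%C.
Proof.
  intros H. unfold Eis. f_equal. apply lim_eventually_C, filterlim_of_Cmod_le. intros eps He.
  destruct (H eps He) as [l0 H0].
  exists (list_max (map (fun p => max (Z.abs_nat (fst p)) (Z.abs_nat (snd p))) l0)).
  intros n Hn. rewrite eis_partial_sumC. apply H0; [apply NoDup_list_prod; apply NoDup_Zbox|].
  intros [c d] Hx. apply in_prod_iff.
  pose proof (In_le_list_max _ _
    (in_map (fun p => max (Z.abs_nat (fst p)) (Z.abs_nat (snd p))) _ _ Hx)).
  simpl in *. split; apply In_Zbox; lia.
Qed.

(** * Complex powers and Dirichlet characters *)

Lemma Rpower_pos x a : 0 < Rpower x a.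
Proof. apply exp_pos. Qed.

Lemma Rpower_2 x : 0 < x -> Rpower x 2 = x * x.
Proof.
  intros Hx. transitivity (Rpower x (INR 2)); [f_equal; simpl; ring|].
  rewrite Rpower_pow by auto. simpl. ring.
Qed.

Lemma cpowR_add x s t : cpowR x (s + t)%C = (cpowR x s * cpowR x t)%C.
Proof.
  destruct s as [a b], t as [c d]. unfold cpowR. simpl.
  apply injective_projections; simpl;
    rewrite !Rmult_plus_distr_r, exp_plus; [rewrite cos_plus | rewrite sin_plus]; ring.
Qed.

Lemma cpowR_mul x y s : 0 < x -> 0 < y -> cpowR (x * y) s = (cpowR x s * cpowR y s)%C.
Proof.
  intros Hx Hy. destruct s as [a b]. unfold cpowR. simpl. rewrite ln_mult by auto.
  apply injective_projections; simpl;
    rewrite !Rmult_plus_distr_l, exp_plus; [rewrite cos_plus | rewrite sin_plus]; ring.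
Qed.

Lemma cpowR_1 s : cpowR 1 s = RtoC 1.
Proof.
  unfold cpowR. rewrite ln_1, !Rmult_0_r, exp_0, cos_0, sin_0.
  apply injective_projections; simpl; ring.
Qed.

Lemma Cmod_cpowR x s : Cmod (cpowR x s) = Rpower x (Re s).
Proof.
  unfold cpowR, Cmod, Rpower. simpl.
  set (E := exp (Re s * ln x)). set (a := Im s * ln x).
  replace (E * cos a * (E * cos a * 1) + E * sin a * (E * sin a * 1))
    with (E ^ 2 * ((sin a)² + (cos a)²)) by (unfold Rsqr; ring).
  rewrite sin2_cos2, Rmult_1_r. apply sqrt_pow2. left; apply exp_pos.
Qed.

Lemma cpowR_neq0 x s : cpowR x s <> RtoC 0.
Proof.
  intros H. pose proof (Cmod_cpowR x s) as E. rewrite H, Cmod_0 in E.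
  pose proof (Rpower_pos x (Re s)). lra.
Qed.

Lemma cpowR_double x s : cpowR x (RtoC 2 * s)%C = (cpowR x s * cpowR x s)%C.
Proof.
  replace (RtoC 2 * s)%C with (s + s)%C by (apply injective_projections; simpl; ring).
  apply cpowR_add.
Qed.

Lemma Re_double s : Re (RtoC 2 * s)%C = 2 * Re s.
Proof. destruct s; unfold Re; simpl; ring. Qed.

Lemma Cmod_cpowZ u k : Cmod u = 1 -> Cmod (cpowZ u k) = 1.
Proof.
  intros H. assert (Hp : forall n, Cmod (pow_n (K := C_Ring) u n) = 1).
  { induction n; simpl; [apply Cmod_1|].
    change (Cmod (u * pow_n (K := C_Ring) u n)%C = 1). rewrite Cmod_mult, IHn, H. ring. }
  unfold cpowZ. destruct (0 <=? k)%Z; auto.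
  rewrite Cmod_inv, Hp; [apply Rinv_1|].
  intros E. specialize (Hp (Z.to_nat (- k))). rewrite E, Cmod_0 in Hp. lra.
Qed.

Lemma Cmod_unit_phase (w : C) : w <> RtoC 0 -> Cmod (RtoC (Cmod w) / w)%C = 1.
Proof.
  intros H. rewrite Cmod_div, Cmod_R, Rabs_pos_eq by (auto; apply Cmod_ge_0).
  apply Rinv_r. apply Cmod_gt_0 in H. lra.
Qed.

Lemma char_periodic q chi : dirichlet_char q chi -> forall m n, chi (n + q * m)%Z = chi n.
Proof.
  intros [Hq [H1 [Hm [Hp _]]]] m. induction m using Z.peano_ind; intros n.
  - rewrite Z.mul_0_r, Z.add_0_r. auto.
  - replace (n + q * Z.succ m)%Z with ((n + q * m) + q)%Z by ring. rewrite Hp. auto.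
  - rewrite <- (IHm n). replace (n + q * m)%Z with ((n + q * Z.pred m) + q)%Z by lia.
    rewrite Hp. auto.
Qed.

Lemma char_bounded q chi : dirichlet_char q chi -> exists B, forall n, Cmod (chi n) <= B.
Proof.
  intros Hc. exists (sumR (fun r => Cmod (chi (Z.of_nat r))) (seq 0 (Z.to_nat q))). intros n.
  assert (Hq : (0 < q)%Z) by apply Hc.
  rewrite (Z_div_mod_eq_full n q), Z.add_comm, (char_periodic q chi Hc).
  assert (0 <= n mod q < q)%Z by (apply Z.mod_pos_bound; lia).
  replace (n mod q)%Z with (Z.of_nat (Z.to_nat (n mod q))) by lia.
  apply (sumR_ge_term (fun r => Cmod (chi (Z.of_nat r)))); [intros; apply Cmod_ge_0|].
  apply in_seq. lia.
Qed.

Lemma char_norm_le1 q chi : dirichlet_char q chi -> forall n, Cmod (chi n) <= 1.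
Proof.
  intros Hc n. destruct (char_bounded q chi Hc) as [B HB].
  destruct Hc as [_ [H1 [Hm _]]].
  assert (Hpow : forall m : nat, Cmod (chi (n ^ Z.of_nat m)%Z) = Cmod (chi n) ^ m).
  { induction m; [simpl; rewrite H1, Cmod_1; auto|].
    rewrite Nat2Z.inj_succ, Z.pow_succ_r, Hm, Cmod_mult, IHm by lia. reflexivity. }
  destruct (Rle_dec (Cmod (chi n)) 1) as [|Hgt]; auto. exfalso.
  destruct (Pow_x_infinity (Cmod (chi n)) ltac:(rewrite Rabs_pos_eq by apply Cmod_ge_0; lra) (B + 1))
    as [N HN].
  specialize (HN N (le_n _)). specialize (HB (n ^ Z.of_nat N)%Z).
  rewrite Hpow in HB.
  rewrite Rabs_pos_eq in HN by (apply pow_le, Cmod_ge_0). lra.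
Qed.

(** * Absolute convergence *)

Lemma Rpower_le_antitone x y a : 0 < x -> x <= y -> a <= 0 -> Rpower y a <= Rpower x a.
Proof.
  intros Hx Hxy Ha. unfold Rpower.
  assert (ln x <= ln y) by (apply ln_le; auto).
  assert (Hle : a * ln y <= a * ln x) by nra.
  destruct (Rle_lt_or_eq_dec _ _ Hle) as [Hl|E]; [left; apply exp_increasing; auto | rewrite E; lra].
Qed.

(* The mean value theorem for u^(1-t) on [x, x+1]: an integral test for sum n^-t. *)
Lemma Rpower_decrement x t : 1 <= x -> 1 < t ->
  (t - 1) * Rpower (x + 1) (- t) <= Rpower x (1 - t) - Rpower (x + 1) (1 - t).
Proof.
  intros Hx Ht.
  destruct (MVT_gen (fun u => Rpower u (1 - t)) x (x + 1)
    (fun u => (1 - t) * / u * Rpower u (1 - t))) as [c [Hc Heq]].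
  - intros u Hu. rewrite Rmin_left, Rmax_right in Hu by lra.
    unfold Rpower. auto_derive; [lra | field; lra].
  - intros u Hu. rewrite Rmin_left, Rmax_right in Hu by lra.
    apply continuity_pt_filterlim.
    apply (@ex_derive_continuous R_AbsRing R_NormedModule (fun u => Rpower u (1 - t))).
    unfold Rpower. auto_derive. lra.
  - rewrite Rmin_left, Rmax_right in Hc by lra. replace (x + 1 - x) with 1 in Heq by ring.
    assert (E : (1 - t) * / c * Rpower c (1 - t) = (1 - t) * Rpower c (- t)).
    { replace (1 - t) with (- t + 1) at 2 by ring.
      rewrite Rpower_plus, Rpower_1 by lra. field. lra. }
    rewrite E in Heq.
    assert (Rpower (x + 1) (- t) <= Rpower c (- t)) by (apply Rpower_le_antitone; lra).
    nra.
Qed.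

Lemma sumR_Rpower_le t N : 1 < t ->
  sumR (fun n => Rpower (INR (S n)) (- t)) (seq 0 (S N))
  <= 1 + (1 - Rpower (INR (S N)) (1 - t)) / (t - 1).
Proof.
  intros Ht. induction N.
  - simpl. unfold Rpower. rewrite ln_1, !Rmult_0_r, exp_0.
    replace ((1 - 1) / (t - 1)) with 0 by (field; lra). lra.
  - rewrite (seq_S (S N)), sumR_app. cbn [sumR]. rewrite Rplus_0_r, Nat.add_0_l.
    assert (H1 : 1 <= INR (S N)) by (apply (le_INR 1); lia).
    pose proof (Rpower_decrement (INR (S N)) t H1 Ht).
    rewrite (S_INR (S N)).
    apply Rmult_le_reg_l with (t - 1); [lra|].
    apply Rmult_le_compat_l with (r := t - 1) in IHN; [|lra].
    replace ((t - 1) * (1 + (1 - Rpower (INR (S N) + 1) (1 - t)) / (t - 1)))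
      with ((t - 1) + (1 - Rpower (INR (S N)) (1 - t))
            + (Rpower (INR (S N)) (1 - t) - Rpower (INR (S N) + 1) (1 - t))) by (field; lra).
    replace ((t - 1) * (1 + (1 - Rpower (INR (S N)) (1 - t)) / (t - 1)))
      with ((t - 1) + (1 - Rpower (INR (S N)) (1 - t))) in IHN by (field; lra).
    lra.
Qed.

Lemma zeta_summable t : 1 < t -> summable (fun n : nat => RtoC (Rpower (INR (S n)) (- t))).
Proof.
  intros Ht. exists (1 + 1 / (t - 1)). intros l Hl.
  set (N := list_max l).
  apply Rle_trans with (sumR (fun n => Cmod (RtoC (Rpower (INR (S n)) (- t)))) (seq 0 (S N))).
  { apply sumR_incl_le; auto using seq_NoDup; [intros; apply Cmod_ge_0|].
    intros x Hx. apply in_seq. pose proof (In_le_list_max l x Hx). unfold N. lia. }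
  rewrite (sumR_eq_in _ (fun n => Rpower (INR (S n)) (- t))).
  2:{ intros x _. rewrite Cmod_R. apply Rabs_pos_eq. left; apply Rpower_pos. }
  eapply Rle_trans; [apply sumR_Rpower_le; auto|].
  pose proof (Rpower_pos (INR (S N)) (1 - t)).
  apply Rplus_le_compat_l. unfold Rdiv. apply Rmult_le_compat_r; [|lra].
  left; apply Rinv_0_lt_compat; lra.
Qed.

(* The enumeration 0, -1, 1, -2, 2, ... of Z. *)
Definition zigzag (n : nat) : Z :=
  let m := Z.of_nat n in if (m mod 2 =? 0)%Z then (m / 2)%Z else (- ((m + 1) / 2))%Z.
Definition unzigzag (c : Z) : nat := Z.to_nat (if (0 <=? c)%Z then 2 * c else - 2 * c - 1)%Z.

Lemma zigzag_unzigzag c : zigzag (unzigzag c) = c.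
Proof.
  unfold zigzag, unzigzag. destruct (Z.leb_spec 0 c); rewrite Z2Nat.id by lia;
    match goal with |- context [(?m mod 2 =? 0)%Z] => destruct (Z.eqb_spec (m mod 2) 0) end;
    Z.div_mod_to_equations; lia.
Qed.

Lemma zigzag_bound n : (Z.of_nat n + 1 <= 2 * (Z.abs (zigzag n) + 1))%Z.
Proof.
  unfold zigzag. destruct (Z.eqb_spec (Z.of_nat n mod 2) 0); Z.div_mod_to_equations; lia.
Qed.

Definition weightZ (sg : R) (c : Z) : R := Rpower (IZR (Z.abs c + 1)) (- sg).

Lemma weightZ_summable sg : 1 < sg -> summable (fun c => RtoC (weightZ sg c)).
Proof.
  intros Hs.
  apply (summable_reindex (fun n => RtoC (weightZ sg (zigzag n))) _ zigzag unzigzag).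
  { intros c _. rewrite zigzag_unzigzag. auto. }
  apply (summable_le _ (fun n : nat => RtoC (Rpower (INR (S n)) (- sg))) (Rpower (/ 2) (- sg)));
    [|apply zeta_summable; auto].
  intros n. rewrite !Cmod_R, !Rabs_pos_eq by (left; apply Rpower_pos).
  assert (0 < INR (S n)) by (apply lt_0_INR; lia).
  unfold weightZ. rewrite Rpower_mult_distr by lra.
  apply Rpower_le_antitone; try lra. 
  pose proof (IZR_le _ _ (zigzag_bound n)) as Hb. rewrite mult_IZR, !plus_IZR in Hb.
  rewrite S_INR, INR_IZR_INZ, plus_IZR. simpl in *. lra.
Qed.

Definition lattice_point (r : Z) (z : C) (c d : Z) : C := (RtoC (IZR (c * r)) * z + RtoC (IZR d))%C.

Definition lattice_weight (k : Z) (s w : C) : C :=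
  (/ cpowR (Cmod w) (RtoC 2 * s) * cpowZ (RtoC (Cmod w) / w) k)%C.

Definition eis_summand (r : Z) (e1 e2 : Z -> C) (k : Z) (z s : C) (c d : Z) : C :=
  (cpowR (IZR r * Im z) s * (e1 c * e2 d) * lattice_weight k s (lattice_point r z c d))%C.

(* The summand of E0 (see the top of the file). *)
Definition eis_term_all (r : Z) (e1 e2 : Z -> C) (k : Z) (z s : C) (p : Z * Z) : C :=
  if ((fst p =? 0)%Z && (snd p =? 0)%Z)%bool then RtoC 0 else eis_summand r e1 e2 k z s (fst p) (snd p).

Lemma eis_term_eq r e1 e2 k z s c d :
  eis_term r e1 e2 k z s c d = if (Z.gcd c d =? 1)%Z then eis_summand r e1 e2 k z s c d else RtoC 0.
Proof.
  unfold eis_term, eis_summand, lattice_weight, lattice_point. cbv zeta.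
  destruct (Z.gcd c d =? 1)%Z; [ring | reflexivity].
Qed.

Lemma eis_term_all_nz r e1 e2 k z s c d : ~ (c = 0 /\ d = 0)%Z ->
  eis_term_all r e1 e2 k z s (c, d) = eis_summand r e1 e2 k z s c d.
Proof.
  intros H. unfold eis_term_all; simpl.
  destruct (Z.eqb_spec c 0), (Z.eqb_spec d 0); simpl; tauto.
Qed.

Lemma lattice_weight_scale k s B w : 0 < B -> w <> RtoC 0 ->
  lattice_weight k s (RtoC B * w)%C = (/ cpowR B (RtoC 2 * s) * lattice_weight k s w)%C.
Proof.
  intros HB Hw. unfold lattice_weight.
  assert (Hwp : 0 < Cmod w) by (apply Cmod_gt_0; auto).
  rewrite Cmod_mult, Cmod_R, Rabs_pos_eq, (cpowR_mul B (Cmod w)) by lra.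
  replace (RtoC (B * Cmod w) / (RtoC B * w))%C with (RtoC (Cmod w) / w)%C.
  2:{ rewrite RtoC_mult. field. split; auto. intros E. apply RtoC_inj in E. lra. }
  assert (N1 := cpowR_neq0 B (RtoC 2 * s)%C). assert (N2 := cpowR_neq0 (Cmod w) (RtoC 2 * s)%C).
  field. split; auto.
Qed.

Lemma Cmod_lattice_point_sq r z c d :
  Cmod (lattice_point r z c d) ^ 2 = (IZR (c * r) * Re z + IZR d) ^ 2 + (IZR (c * r) * Im z) ^ 2.
Proof. rewrite Cmod2_alt. unfold lattice_point. destruct z; simpl. f_equal; ring. Qed.

Lemma quadratic_form_lower_bound x y u v : 0 < y ->
  y ^ 2 / (1 + x ^ 2 + y ^ 2) * (u ^ 2 + v ^ 2) <= (u * x + v) ^ 2 + (u * y) ^ 2.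
Proof.
  intros Hy. assert (HT : 0 < 1 + x ^ 2 + y ^ 2) by nra.
  apply Rmult_le_reg_l with (1 + x ^ 2 + y ^ 2); auto.
  replace ((1 + x ^ 2 + y ^ 2) * (y ^ 2 / (1 + x ^ 2 + y ^ 2) * (u ^ 2 + v ^ 2)))
    with (y ^ 2 * (u ^ 2 + v ^ 2)) by (field; lra).
  assert (E : (1 + x ^ 2 + y ^ 2) * ((u * x + v) ^ 2 + (u * y) ^ 2) - y ^ 2 * (u ^ 2 + v ^ 2)
              = (u * x + v) ^ 2 + ((x ^ 2 + y ^ 2) * u + x * v) ^ 2) by ring.
  pose proof (pow2_ge_0 (u * x + v)). pose proof (pow2_ge_0 ((x ^ 2 + y ^ 2) * u + x * v)). lra.
Qed.

Lemma abs_succ_mul_le (c d : Z) : ~ (c = 0 /\ d = 0)%Z ->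
  ((Z.abs c + 1) * (Z.abs d + 1) <= 4 * (c * c + d * d))%Z.
Proof.
  intros H.
  destruct (Z.abs_spec c) as [[? ->]|[? ->]], (Z.abs_spec d) as [[? ->]|[? ->]]; nia.
Qed.

Definition lattice_const (z : C) : R := Im z ^ 2 / (1 + Re z ^ 2 + Im z ^ 2) / 4.

Lemma lattice_const_pos z : 0 < Im z -> 0 < lattice_const z.
Proof. intros H. unfold lattice_const. apply Rdiv_lt_0_compat; [apply Rdiv_lt_0_compat|]; nra. Qed.

Lemma Cmod_lattice_point_sq_ge r z c d : 0 < Im z -> (1 <= r)%Z -> ~ (c = 0 /\ d = 0)%Z ->
  lattice_const z * (IZR (Z.abs c + 1) * IZR (Z.abs d + 1)) <= Cmod (lattice_point r z c d) ^ 2.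
Proof.
  intros Hy Hr Hcd. rewrite Cmod_lattice_point_sq.
  eapply Rle_trans; [|apply quadratic_form_lower_bound; auto].
  assert (H1 : IZR (Z.abs c + 1) * IZR (Z.abs d + 1) <= 4 * (IZR c ^ 2 + IZR d ^ 2)).
  { replace (4 * (IZR c ^ 2 + IZR d ^ 2)) with (IZR (4 * (c * c + d * d)))
      by (rewrite mult_IZR, plus_IZR, !mult_IZR; simpl; ring).
    rewrite <- mult_IZR. apply IZR_le, abs_succ_mul_le; auto. }
  assert (H2 : IZR c ^ 2 <= IZR (c * r) ^ 2).
  { rewrite mult_IZR, Rpow_mult_distr. assert (1 <= IZR r) by (apply IZR_le; auto).
    pose proof (pow2_ge_0 (IZR c)). assert (1 <= IZR r ^ 2) by nra. nra. }
  assert (HT : 0 < Im z ^ 2 / (1 + Re z ^ 2 + Im z ^ 2)) by (apply Rdiv_lt_0_compat; nra).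
  unfold lattice_const. set (T := Im z ^ 2 / (1 + Re z ^ 2 + Im z ^ 2)) in *.
  apply Rle_trans with (T * (IZR c ^ 2 + IZR d ^ 2)); nra.
Qed.

Lemma lattice_point_neq0 r z c d : 0 < Im z -> (1 <= r)%Z -> ~ (c = 0 /\ d = 0)%Z ->
  lattice_point r z c d <> RtoC 0.
Proof.
  intros Hy Hr Hcd E. pose proof (Cmod_lattice_point_sq_ge r z c d Hy Hr Hcd) as H.
  rewrite E, Cmod_0, pow_i in H by lia.
  pose proof (lattice_const_pos z Hy).
  assert (0 < IZR (Z.abs c + 1)) by (apply IZR_lt; lia).
  assert (0 < IZR (Z.abs d + 1)) by (apply IZR_lt; lia).
  pose proof (Rmult_lt_0_compat _ _ H1 H2). nra.
Qed.

Lemma Rinv_Rpower_sq_le x a b : 0 < x -> 0 < a -> 0 <= b -> a <= x ^ 2 ->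
  / Rpower x (2 * b) <= Rpower a (- b).
Proof.
  intros Hx Ha Hb Hax.
  rewrite <- Rpower_Ropp, Ropp_mult_distr_r, <- Rpower_mult.
  rewrite Rpower_2 by auto.
  apply Rpower_le_antitone; [lra | nra | lra].
Qed.

Lemma Cmod_eis_summand_le r e1 e2 k z s c d : 0 < Im z -> (1 <= r)%Z -> 0 <= Re s ->
  (forall n, Cmod (e1 n) <= 1) -> (forall n, Cmod (e2 n) <= 1) -> ~ (c = 0 /\ d = 0)%Z ->
  Cmod (eis_summand r e1 e2 k z s c d)
  <= Rpower (IZR r * Im z) (Re s) * Rpower (lattice_const z) (- Re s)
     * (weightZ (Re s) c * weightZ (Re s) d).
Proof.
  intros Hy Hr Hs He1 He2 Hcd.
  assert (Hw := lattice_point_neq0 r z c d Hy Hr Hcd). set (w := lattice_point r z c d) in *.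
  unfold eis_summand, lattice_weight. fold w.
  rewrite !Cmod_mult, Cmod_cpowZ, Cmod_inv, !Cmod_cpowR, Re_double, Rmult_1_r
    by (auto using Cmod_unit_phase, cpowR_neq0).
  assert (HA : 0 < IZR (Z.abs c + 1)) by (apply IZR_lt; lia).
  assert (HB : 0 < IZR (Z.abs d + 1)) by (apply IZR_lt; lia).
  assert (Hk := lattice_const_pos z Hy).
  assert (E : / Rpower (Cmod w) (2 * Re s)
              <= Rpower (lattice_const z) (- Re s) * (weightZ (Re s) c * weightZ (Re s) d)).
  { unfold weightZ. rewrite Rpower_mult_distr, Rpower_mult_distr by (auto using Rmult_lt_0_compat).
    apply Rinv_Rpower_sq_le;
      [apply Cmod_gt_0; auto | auto using Rmult_lt_0_compat | lra
      | apply Cmod_lattice_point_sq_ge; auto]. }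
  assert (0 <= Cmod (e1 c) * Cmod (e2 d) <= 1).
  { pose proof (Cmod_ge_0 (e1 c)). pose proof (Cmod_ge_0 (e2 d)).
    specialize (He1 c). specialize (He2 d). split; nra. }
  pose proof (Rpower_pos (IZR r * Im z) (Re s)).
  assert (0 < / Rpower (Cmod w) (2 * Re s)) by (apply Rinv_0_lt_compat, Rpower_pos).
  apply Rle_trans with (Rpower (IZR r * Im z) (Re s) * 1 * / Rpower (Cmod w) (2 * Re s));
    [apply Rmult_le_compat_r; nra|].
  rewrite Rmult_1_r, Rmult_assoc. apply Rmult_le_compat_l; lra.
Qed.

Lemma eis_term_all_summable r e1 e2 k z s : 0 < Im z -> (1 <= r)%Z -> 1 < Re s ->
  (forall n, Cmod (e1 n) <= 1) -> (forall n, Cmod (e2 n) <= 1) ->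
  summable (eis_term_all r e1 e2 k z s).
Proof.
  intros Hy Hr Hs He1 He2.
  apply (summable_le _ (fun p => RtoC (weightZ (Re s) (fst p)) * RtoC (weightZ (Re s) (snd p)))%C
     (Rpower (IZR r * Im z) (Re s) * Rpower (lattice_const z) (- Re s))).
  - intros [c d]. simpl fst; simpl snd.
    rewrite Cmod_mult, !Cmod_R, !Rabs_pos_eq by (left; apply Rpower_pos).
    destruct (classic (c = 0 /\ d = 0)%Z) as [[-> ->]|Hcd].
    + unfold eis_term_all. simpl. rewrite Cmod_0. unfold weightZ.
      repeat apply Rmult_le_pos; left; apply Rpower_pos.
    + rewrite eis_term_all_nz by auto. apply Cmod_eis_summand_le; auto; lra.
  - apply (summable_prod (fun c => RtoC (weightZ (Re s) c)) (fun c => RtoC (weightZ (Re s) c)));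
      apply weightZ_summable; auto.
Qed.

Lemma eis_term_summable r e1 e2 k z s : 0 < Im z -> (1 <= r)%Z -> 1 < Re s ->
  (forall n, Cmod (e1 n) <= 1) -> (forall n, Cmod (e2 n) <= 1) ->
  summable (fun p => eis_term r e1 e2 k z s (fst p) (snd p)).
Proof.
  intros. apply (summable_le _ (eis_term_all r e1 e2 k z s) 1); [|apply eis_term_all_summable; auto].
  intros [c d]. simpl. rewrite eis_term_eq, Rmult_1_l.
  destruct (Z.eqb_spec (Z.gcd c d) 1) as [Hg|]; [|rewrite Cmod_0; apply Cmod_ge_0].
  rewrite eis_term_all_nz; [lra|]. intros [-> ->]. discriminate.
Qed.

Lemma dirichlet_term_summable f s : 1 < Re s -> (forall n, Cmod (f n) <= 1) ->
  summable (dirichlet_term f s).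
Proof.
  intros Hs Hf.
  apply (summable_le _ (fun n : nat => RtoC (Rpower (INR (S n)) (- Re s))) 1);
    [|apply zeta_summable; auto].
  intros n. unfold dirichlet_term.
  rewrite Cmod_mult, Cmod_inv, Cmod_cpowR, Cmod_R, Rabs_pos_eq, Rmult_1_l, <- Rpower_Ropp
    by (apply cpowR_neq0 || (left; apply Rpower_pos)).
  pose proof (Rpower_pos (INR (S n)) (- Re s)). specialize (Hf (Z.of_nat (S n))). nra.
Qed.

Lemma Cmod_mult_le1 (u v : C) : Cmod u <= 1 -> Cmod v <= 1 -> Cmod (u * v)%C <= 1.
Proof. intros. rewrite Cmod_mult. pose proof (Cmod_ge_0 u). pose proof (Cmod_ge_0 v). nra. Qed.

(** * Sorting lattice points by their gcd *)

Lemma lattice_point_scale r z m c d :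
  lattice_point r z (m * c) (m * d) = (RtoC (IZR m) * lattice_point r z c d)%C.
Proof.
  unfold lattice_point. rewrite !mult_IZR. destruct z. apply injective_projections; simpl; ring.
Qed.

Lemma eis_summand_scale r e1 e2 k z s m c d :
  (0 < m)%Z -> 0 < Im z -> (1 <= r)%Z -> ~ (c = 0 /\ d = 0)%Z ->
  (forall a b, e1 (a * b)%Z = (e1 a * e1 b)%C) -> (forall a b, e2 (a * b)%Z = (e2 a * e2 b)%C) ->
  eis_summand r e1 e2 k z s (m * c) (m * d)
  = (e1 m * e2 m * / cpowR (IZR m) (RtoC 2 * s) * eis_summand r e1 e2 k z s c d)%C.
Proof.
  intros Hm Hy Hr Hcd M1 M2. unfold eis_summand.
  rewrite lattice_point_scale, lattice_weight_scale, M1, M2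
    by (apply IZR_lt; auto) || (apply lattice_point_neq0; auto).
  ring.
Qed.

Lemma Z_gcd_pos c d : ~ (c = 0 /\ d = 0)%Z -> (0 < Z.gcd c d)%Z.
Proof.
  intros H. pose proof (Z.gcd_nonneg c d).
  destruct (Z.eq_dec (Z.gcd c d) 0) as [E|]; [apply Z.gcd_eq_0 in E; tauto | lia].
Qed.

Definition scale_pair (j : nat * (Z * Z)) : Z * Z :=
  (Z.of_nat (S (fst j)) * fst (snd j), Z.of_nat (S (fst j)) * snd (snd j))%Z.

Definition split_gcd (p : Z * Z) : nat * (Z * Z) :=
  let g := Z.gcd (fst p) (snd p) in (pred (Z.to_nat g), (fst p / g, snd p / g))%Z.

Lemma split_gcd_scale_pair n c d : Z.gcd c d = 1%Z -> split_gcd (scale_pair (n, (c, d))) = (n, (c, d)).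
Proof.
  intros Hg. unfold split_gcd, scale_pair; cbn [fst snd].
  rewrite Z.gcd_mul_mono_l_nonneg, Hg, Z.mul_1_r by lia.
  f_equal; [lia | f_equal; rewrite Z.mul_comm, Z.div_mul; lia].
Qed.

Lemma split_gcd_spec c d : ~ (c = 0 /\ d = 0)%Z ->
  let j := split_gcd (c, d) in
  scale_pair j = (c, d) /\ Z.gcd (fst (snd j)) (snd (snd j)) = 1%Z /\
  Z.of_nat (S (fst j)) = Z.gcd c d.
Proof.
  intros Hcd. unfold split_gcd, scale_pair; cbn [fst snd].
  assert (HG := Z_gcd_pos c d Hcd).
  assert (ES : Z.of_nat (S (pred (Z.to_nat (Z.gcd c d)))) = Z.gcd c d) by lia.
  rewrite ES. split; [|split; auto; apply Z.gcd_div_gcd; lia].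
  destruct (Z.gcd_divide_l c d) as [c' Hc'], (Z.gcd_divide_r c d) as [d' Hd'].
  f_equal; [rewrite Hc' at 2 | rewrite Hd' at 2]; rewrite Z.div_mul; lia.
Qed.

Lemma eis_term_all_factorization r e1 e2 k z s L S :
  0 < Im z -> (1 <= r)%Z -> 1 < Re s ->
  (forall n, Cmod (e1 n) <= 1) -> (forall n, Cmod (e2 n) <= 1) ->
  (forall a b, e1 (a * b)%Z = (e1 a * e1 b)%C) -> (forall a b, e2 (a * b)%Z = (e2 a * e2 b)%C) ->
  has_sum (dirichlet_term (fun n => e1 n * e2 n)%C (RtoC 2 * s)%C) L ->
  has_sum (fun p => eis_term r e1 e2 k z s (fst p) (snd p)) S ->
  has_sum (eis_term_all r e1 e2 k z s) (L * S)%C.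
Proof.
  intros Hy Hr Hs B1 B2 M1 M2 HL HS.
  assert (Hs2 : 1 < Re (RtoC 2 * s)%C) by (rewrite Re_double; lra).
  assert (HP := has_sum_prod _ _ _ _
    (dirichlet_term_summable _ _ Hs2 (fun n => Cmod_mult_le1 _ _ (B1 n) (B2 n)))
    (eis_term_summable r e1 e2 k z s Hy Hr Hs B1 B2) HL HS).
  refine (has_sum_reindex _ _ scale_pair split_gcd _ _ _ HP).
  - intros [n [c d]] HF. cbn [fst snd] in HF |- *. rewrite eis_term_eq in HF |- *.
    destruct (Z.eqb_spec (Z.gcd c d) 1) as [Hg|]; [|exfalso; apply HF; ring].
    assert (Hcd : ~ (c = 0 /\ d = 0)%Z) by (intros [-> ->]; discriminate).
    split; [apply split_gcd_scale_pair; auto|].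
    unfold scale_pair; cbn [fst snd]. rewrite eis_term_all_nz by nia.
    rewrite eis_summand_scale by (auto; lia). unfold dirichlet_term. rewrite INR_IZR_INZ. ring.
  - intros [c d] Hf.
    assert (Hcd : ~ (c = 0 /\ d = 0)%Z) by (intros [-> ->]; apply Hf; reflexivity).
    destruct (split_gcd_spec c d Hcd) as [E1 [E2 _]].
    destruct (split_gcd (c, d)) as [n [c' d']]. cbn [fst snd] in *.
    split; auto. rewrite eis_term_eq, E2, Z.eqb_refl. cbv beta iota.
    unfold scale_pair in E1. cbn [fst snd] in E1. apply pair_equal_spec in E1 as [<- <-].
    rewrite eis_term_all_nz by nia.
    rewrite eis_summand_scale by (auto; try lia; intros [-> ->]; discriminate).
    unfold dirichlet_term. rewrite INR_IZR_INZ. ring.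
Qed.

(** * The Moebius function *)

Module MoebiusNat.
Import ssreflect ssrbool ssrnat eqtype seq prime div.

Lemma dvdn_divide d m : (d %| m) = true <-> Nat.divide d m.
Proof. split; [by move/dvdnP => [k ->]; exists k | move=> [k ->]; apply/dvdnP; by exists k]. Qed.

Lemma size_length {T} (s : list T) : size s = length s.
Proof. by elim: s => //= x s ->. Qed.

Lemma moebius_nat_prime_mul_dvd p d : prime p -> (0 < d)%coq_nat -> Nat.divide p d ->
  moebius_nat (p * d) = 0%Z.
Proof.
  move=> pp /ltP d0 /dvdn_divide pd. rewrite /moebius_nat.
  have p0 : (0 < p)%N by apply: prime_gt0.
  case E: (all _ _) => //.
  have Hp : p \in primes (p * d) by rewrite mem_primes pp muln_gt0 p0 d0 dvdn_mulr.
  move/allP: E => /(_ p Hp). rewrite lognM // logn_prime // eqxx.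
  have : (0 < logn p d)%N by rewrite logn_gt0 mem_primes pp d0 pd.
  by case: (logn p d).
Qed.

Lemma moebius_nat_prime_mul_ndvd p d : prime p -> (0 < d)%coq_nat -> ~ Nat.divide p d ->
  moebius_nat (p * d) = (- moebius_nat d)%Z.
Proof.
  move=> pp /ltP d0 npd'. rewrite /moebius_nat.
  have npd : ~~ (p %| d) by apply/negP => /dvdn_divide.
  have p0 : (0 < p)%N by apply: prime_gt0.
  have Hperm : perm_eq (primes (p * d)) (p :: primes d).
  { apply: uniq_perm; first exact: primes_uniq.
    - by rewrite /= primes_uniq andbT mem_primes pp d0 /= npd.
    - move=> q. by rewrite primesM // primes_prime // !in_cons in_nil orbF. }
  rewrite (perm_all _ Hperm) -!size_length (perm_size Hperm).
  change (size (p :: primes d)) with (S (size (primes d))).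
  change (all ?P (p :: ?s)) with (P p && all P s). cbv beta.
  rewrite lognM // logn_prime // eqxx (@logn_coprime p d) ?prime_coprime //.
  have -> : all (fun q => Nat.eqb (logn q (p * d)) 1) (primes d)
          = all (fun q => Nat.eqb (logn q d) 1) (primes d).
  { apply: eq_in_all => q Hq. rewrite lognM // logn_prime //.
    have /negbTE -> : q != p.
    { apply/eqP => Eq. subst q. move: Hq. by rewrite mem_primes pp d0 /= (negbTE npd). }
    by []. }
  case: (all _ _) => //. rewrite Nat2Z.inj_succ Z.pow_succ_r //. lia.
Qed.

Lemma divide_of_divide_prime_mul p n m : prime p -> Nat.divide n (p * m) -> ~ Nat.divide p n ->
  Nat.divide n m.
Proof.
  move=> pp /dvdn_divide H npn. apply/dvdn_divide.
  rewrite -(Gauss_dvdr m (_ : coprime n p)) //.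
  rewrite coprime_sym prime_coprime //. by apply/negP => /dvdn_divide.
Qed.

Lemma exists_prime_divisor g : (1 < g)%coq_nat -> exists p, prime p /\ Nat.divide p g.
Proof.
  move=> /ltP H. exists (pdiv g). split; first exact: pdiv_prime.
  apply/dvdn_divide. exact: pdiv_dvd.
Qed.

Lemma prime_pos p : prime p -> (0 < p)%coq_nat.
Proof. by move=> /prime_gt0 /ltP. Qed.

End MoebiusNat.

Definition divisors_nat (g : nat) : list nat := filter (fun n => Nat.eqb (g mod n) 0) (seq 1 g).

Lemma In_divisors_nat g n : (0 < g)%nat -> In n (divisors_nat g) <-> (0 < n)%nat /\ Nat.divide n g.
Proof.
  intros Hg. unfold divisors_nat. rewrite filter_In, in_seq, Nat.eqb_eq. split.
  - intros [H1 H2]. split; [lia | apply Nat.Lcm0.mod_divide; auto].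
  - intros [H1 H2]. pose proof (Nat.divide_pos_le n g Hg H2).
    split; [lia | apply Nat.Lcm0.mod_divide; auto].
Qed.

Lemma NoDup_divisors_nat g : NoDup (divisors_nat g).
Proof. apply NoDup_filter, seq_NoDup. Qed.

Section PrimeMultiple.
Variables (p m : nat).
Hypotheses (pp : is_true (prime.prime p)) (Hm : (0 < m)%nat).

Let dvd_p (n : nat) : bool := Nat.eqb (n mod p) 0.

Lemma dvd_p_spec n : dvd_p n = true <-> Nat.divide p n.
Proof. unfold dvd_p. rewrite Nat.eqb_eq. apply Nat.Lcm0.mod_divide. Qed.

Lemma divisors_prime_mul_ndvd :
  Permutation (filter (fun n => negb (dvd_p n)) (divisors_nat (p * m)))
              (filter (fun n => negb (dvd_p n)) (divisors_nat m)).
Proof.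
  pose proof (MoebiusNat.prime_pos p pp).
  apply NoDup_Permutation; try apply NoDup_filter, NoDup_divisors_nat.
  intros n. rewrite !filter_In, !In_divisors_nat by lia.
  destruct (dvd_p n) eqn:E; cbn [negb]; [split; intros [_ H']; discriminate|].
  assert (~ Nat.divide p n) by (rewrite <- dvd_p_spec; congruence).
  split; intros [[H1 H2] _]; (split; [split|]; auto).
  - apply (MoebiusNat.divide_of_divide_prime_mul p); auto.
  - apply Nat.divide_mul_r. auto.
Qed.

Lemma divisors_prime_mul_dvd :
  Permutation (filter dvd_p (divisors_nat (p * m))) (map (Nat.mul p) (divisors_nat m)).
Proof.
  pose proof (MoebiusNat.prime_pos p pp).
  apply NoDup_Permutation.
  - apply NoDup_filter, NoDup_divisors_nat.
  - apply NoDup_map_NoDup_ForallPairs; [|apply NoDup_divisors_nat].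
    intros x y _ _ E. apply Nat.mul_cancel_l in E; lia.
  - intros n. rewrite filter_In, In_divisors_nat, in_map_iff, dvd_p_spec by lia. split.
    + intros [[H1 H2] [e ->]]. exists e. rewrite In_divisors_nat by lia.
      split; [lia | split; [destruct e; lia|]].
      rewrite Nat.mul_comm in H2. apply Nat.mul_divide_cancel_l in H2; auto. lia.
    + intros [e [<- He]]. apply In_divisors_nat in He as [He1 He2]; auto.
      split; [split; [nia | apply Nat.mul_divide_mono_l; auto] | apply Nat.divide_factor_l].
Qed.

Lemma sum_moebius_divisors_prime_mul :
  sumR (fun n => IZR (moebius_nat n)) (divisors_nat (p * m)) = 0.
Proof.
  pose proof (MoebiusNat.prime_pos p pp).
  rewrite (sumR_filter _ dvd_p), (sumR_perm _ _ _ divisors_prime_mul_ndvd),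
    (sumR_perm _ _ _ divisors_prime_mul_dvd), sumR_map.
  rewrite (sumR_eq_in (fun e => IZR (moebius_nat (p * e)))
                      (fun e => if dvd_p e then 0 else - IZR (moebius_nat e))).
  2:{ intros e He. apply In_divisors_nat in He as [He _]; auto. destruct (dvd_p e) eqn:E.
      - apply dvd_p_spec in E. rewrite MoebiusNat.moebius_nat_prime_mul_dvd; auto.
      - rewrite MoebiusNat.moebius_nat_prime_mul_ndvd, opp_IZR; auto.
        rewrite <- dvd_p_spec. congruence. }
  rewrite (sumR_filter _ dvd_p (divisors_nat m)).
  rewrite (sumR_eq0 _ (filter dvd_p (divisors_nat m))).
  2:{ intros x Hx. apply filter_In in Hx as [_ ->]. reflexivity. }
  rewrite (sumR_eq_in _ (fun e => -1 * IZR (moebius_nat e)) (filter (fun x => negb (dvd_p x)) _)).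
  2:{ intros x Hx. apply filter_In in Hx as [_ Hx]. destruct (dvd_p x); [discriminate | ring]. }
  rewrite sumR_scal. ring.
Qed.

End PrimeMultiple.

Lemma sum_moebius_divisors g : (0 < g)%nat ->
  sumR (fun n => IZR (moebius_nat n)) (divisors_nat g) = if Nat.eqb g 1 then 1 else 0.
Proof.
  intros Hg. destruct (Nat.eqb_spec g 1) as [->|Hg1].
  { change (IZR 1 + 0 = 1). lra. }
  destruct (MoebiusNat.exists_prime_divisor g ltac:(lia)) as [p [pp [m ->]]].
  rewrite Nat.mul_comm. apply sum_moebius_divisors_prime_mul; auto. destruct m; lia.
Qed.

Definition pos_divisors (q : Z) : list Z :=
  filter (fun a => ((0 <? a) && (Z.rem q a =? 0))%Z%bool) (map Z.of_nat (seq 0 (S (Z.to_nat q)))).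

Lemma In_pos_divisors q a : (0 < q)%Z -> In a (pos_divisors q) <-> (0 < a)%Z /\ (a | q)%Z.
Proof.
  intros Hq. unfold pos_divisors.
  rewrite filter_In, in_map_iff, Bool.andb_true_iff, Z.ltb_lt, Z.eqb_eq. split.
  - intros [_ [Ha Hr]]. split; auto. apply Z.rem_divide; lia.
  - intros [Ha Hd]. pose proof (Z.divide_pos_le _ _ Hq Hd).
    split; [exists (Z.to_nat a); split; [lia | apply in_seq; lia]|].
    split; auto. apply Z.rem_divide; [lia | auto].
Qed.

Lemma NoDup_pos_divisors q : NoDup (pos_divisors q).
Proof.
  apply NoDup_filter, NoDup_map_NoDup_ForallPairs; [intros x y _ _; lia | apply seq_NoDup].
Qed.

Lemma divsum_sumC q F : divsum q F = sumC F (pos_divisors q).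
Proof.
  unfold divsum, pos_divisors. rewrite sum_n_sumC.
  set (P := fun a => ((0 <? a) && (Z.rem q a =? 0))%Z%bool).
  rewrite <- (sumC_map (fun a => if P a then F a else RtoC 0) Z.of_nat).
  rewrite (sumC_filter_support (fun a => if P a then F a else RtoC 0) P)
    by (intros a _ Ha; cbv beta; rewrite Ha; reflexivity).
  apply sumC_eq_in. intros a Ha. apply filter_In in Ha as [_ Ha]. cbv beta. rewrite Ha. reflexivity.
Qed.

Lemma divsum_ext q F G : (0 < q)%Z -> (forall a, (0 < a)%Z -> (a | q)%Z -> F a = G a) ->
  divsum q F = divsum q G.
Proof.
  intros Hq H. rewrite !divsum_sumC. apply sumC_eq_in.
  intros a Ha. apply In_pos_divisors in Ha as [Ha Hd]; auto.
Qed.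

Lemma divsum_scal q F X : divsum q (fun a => F a * X)%C = (divsum q F * X)%C.
Proof. rewrite !divsum_sumC, Cmult_comm, <- sumC_scal. apply sumC_eq_in. intros; ring. Qed.

Lemma has_sum_divsum {I} q (F : Z -> I -> C) (V : Z -> C) : (0 < q)%Z ->
  (forall a, (0 < a)%Z -> (a | q)%Z -> has_sum (F a) (V a)) ->
  has_sum (fun x => divsum q (fun a => F a x)) (divsum q V).
Proof.
  intros Hq H. rewrite divsum_sumC.
  apply (has_sum_ext (fun x => sumC (fun a => F a x) (pos_divisors q)));
    [intros; rewrite divsum_sumC; auto|].
  apply has_sum_sumC. intros a Ha. apply In_pos_divisors in Ha; auto. apply H; tauto.
Qed.

Lemma Nat2Z_divide a b : Nat.divide a b <-> (Z.of_nat a | Z.of_nat b)%Z.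
Proof.
  split; intros [k Hk].
  - exists (Z.of_nat k). lia.
  - destruct a as [|a]; [exists 0%nat; lia|].
    assert (0 <= k)%Z by nia. exists (Z.to_nat k). nia.
Qed.

Lemma pos_common_divisors_perm q c : (0 < q)%Z ->
  Permutation (filter (fun a => Z.rem c a =? 0)%Z (pos_divisors q))
              (map Z.of_nat (divisors_nat (Z.to_nat (Z.gcd c q)))).
Proof.
  intros Hq. assert (HG : (0 < Z.gcd c q)%Z) by (apply Z_gcd_pos; lia).
  apply NoDup_Permutation.
  - apply NoDup_filter, NoDup_pos_divisors.
  - apply NoDup_map_NoDup_ForallPairs; [intros x y _ _; lia | apply NoDup_divisors_nat].
  - intros a. rewrite filter_In, In_pos_divisors, in_map_iff, Z.eqb_eq by auto. split.
    + intros [[Ha Hd] Hr]. exists (Z.to_nat a). rewrite In_divisors_nat by lia.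
      split; [lia | split; [lia|]]. apply Nat2Z_divide. rewrite !Z2Nat.id by lia.
      apply Z.gcd_greatest; auto. apply Z.rem_divide; lia.
    + intros [n [<- Hn]]. apply In_divisors_nat in Hn as [Hn Hd]; [|lia].
      apply Nat2Z_divide in Hd. rewrite Z2Nat.id in Hd by lia.
      split; [split; [lia | eapply Z.divide_trans; [apply Hd | apply Z.gcd_divide_r]]|].
      apply Z.rem_divide; [lia|]. eapply Z.divide_trans; [apply Hd | apply Z.gcd_divide_l].
Qed.

Lemma sum_moebius_common_divisors q c : (0 < q)%Z ->
  divsum q (fun a => if (Z.rem c a =? 0)%Z then RtoC (IZR (moebius a)) else RtoC 0)
  = if (Z.gcd c q =? 1)%Z then RtoC 1 else RtoC 0.
Proof.
  intros Hq. rewrite divsum_sumC.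
  rewrite (sumC_filter_support _ (fun a => Z.rem c a =? 0)%Z) by (intros a _ ->; reflexivity).
  rewrite (sumC_eq_in _ (fun a => RtoC (IZR (moebius a))))
    by (intros a Ha; apply filter_In in Ha as [_ ->]; reflexivity).
  rewrite (sumC_perm _ _ _ (pos_common_divisors_perm q c Hq)), sumC_map, sumC_RtoC.
  assert (HG : (0 < Z.to_nat (Z.gcd c q))%nat) by (pose proof (Z_gcd_pos c q); lia).
  rewrite (sumR_eq_in _ (fun n => IZR (moebius_nat n))).
  - rewrite sum_moebius_divisors by auto.
    destruct (Z.eqb_spec (Z.gcd c q) 1) as [->|E]; [reflexivity|].
    replace (Nat.eqb (Z.to_nat (Z.gcd c q)) 1) with false; [reflexivity|].
    symmetry. apply Nat.eqb_neq. lia.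
  - intros n Hn. apply In_divisors_nat in Hn as [Hn _]; auto.
    unfold moebius. rewrite Nat2Z.id. destruct (Z.ltb_spec 0 (Z.of_nat n)); [reflexivity | lia].
Qed.

(** * Expansion over the divisors of the moduli *)

Definition twisted_point (q2 qs2 a b : Z) (z : C) : C := (RtoC (IZR (a * q2) / IZR (b * qs2)) * z)%C.

Definition twisted_term (e1 e2 : Z -> C) (q2 qs2 k : Z) (z s : C) (a b : Z) (p : Z * Z) : C :=
  if ((Z.rem (fst p) a =? 0)%Z && (Z.rem (snd p) b =? 0)%Z)%bool then
    (e1 a * e2 b * / cpowR (IZR (a * b)) s
     * eis_term_all qs2 e1 e2 k (twisted_point q2 qs2 a b z) s (fst p / a, snd p / b)%Z)%C
  else RtoC 0.

Section Twist.
Variables (q2 qs2 a b : Z) (z s : C).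
Hypotheses (Ha : (0 < a)%Z) (Hb : (0 < b)%Z) (Hq2 : (0 < q2)%Z) (Hqs2 : (0 < qs2)%Z)
  (Hy : 0 < Im z).

Lemma Im_twisted_point : Im (twisted_point q2 qs2 a b z) = IZR (a * q2) / IZR (b * qs2) * Im z.
Proof. unfold twisted_point. destruct z. unfold Im. simpl. ring. Qed.

Lemma Im_twisted_point_pos : 0 < Im (twisted_point q2 qs2 a b z).
Proof.
  rewrite Im_twisted_point. apply Rmult_lt_0_compat; auto.
  apply Rdiv_lt_0_compat; apply IZR_lt; lia.
Qed.

Lemma lattice_point_twist c d :
  lattice_point q2 z (a * c) (b * d)
  = (RtoC (IZR b) * lattice_point qs2 (twisted_point q2 qs2 a b z) c d)%C.
Proof.
  unfold lattice_point, twisted_point. rewrite !mult_IZR.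
  assert (IZR b <> 0) by (apply not_0_IZR; lia). assert (IZR qs2 <> 0) by (apply not_0_IZR; lia).
  destruct z as [x y]. apply injective_projections; simpl; field; auto.
Qed.

Lemma cpowR_twist :
  (/ cpowR (IZR (a * b)) s * cpowR (IZR qs2 * Im (twisted_point q2 qs2 a b z)) s
   * cpowR (IZR b) (RtoC 2 * s))%C = cpowR (IZR q2 * Im z) s.
Proof.
  rewrite Im_twisted_point, cpowR_double.
  assert (HA : 0 < IZR a) by (apply IZR_lt; lia). assert (HB : 0 < IZR b) by (apply IZR_lt; lia).
  assert (HQ : 0 < IZR q2) by (apply IZR_lt; lia). assert (HQs : 0 < IZR qs2) by (apply IZR_lt; lia).
  replace (IZR qs2 * (IZR (a * q2) / IZR (b * qs2) * Im z)) with (IZR a / IZR b * (IZR q2 * Im z))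
    by (rewrite !mult_IZR; field; lra).
  assert (HAB : 0 < IZR a / IZR b) by (apply Rdiv_lt_0_compat; auto).
  rewrite (cpowR_mul (IZR a / IZR b)) by nra.
  replace (IZR (a * b)) with (IZR a / IZR b * IZR b * IZR b) by (rewrite mult_IZR; field; lra).
  rewrite !cpowR_mul by nra.
  assert (N1 := cpowR_neq0 (IZR a / IZR b) s). assert (N2 := cpowR_neq0 (IZR b) s).
  field. auto.
Qed.

Variables (e1 e2 : Z -> C) (k : Z).
Hypotheses (M1 : forall m n, e1 (m * n)%Z = (e1 m * e1 n)%C)
  (M2 : forall m n, e2 (m * n)%Z = (e2 m * e2 n)%C).

Lemma twisted_term_eq c d : (a | c)%Z -> (b | d)%Z -> ~ (c = 0 /\ d = 0)%Z ->
  twisted_term e1 e2 q2 qs2 k z s a b (c, d) = eis_summand q2 e1 e2 k z s c d.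
Proof.
  intros [c' ->] [d' ->] Hcd.
  unfold twisted_term. cbn [fst snd].
  rewrite !Z.rem_mul, !Z.div_mul, Z.eqb_refl by lia. cbn [andb].
  rewrite eis_term_all_nz by (intros [-> ->]; apply Hcd; lia).
  unfold eis_summand.
  rewrite (Z.mul_comm c' a), (Z.mul_comm d' b), lattice_point_twist, lattice_weight_scale
    by (apply IZR_lt; lia)
       || (apply lattice_point_neq0;
           [apply Im_twisted_point_pos | lia | intros [-> ->]; apply Hcd; lia]).
  rewrite <- cpowR_twist, !M1, !M2.
  assert (N := cpowR_neq0 (IZR b) (RtoC 2 * s)%C).
  field. split; auto. apply cpowR_neq0.
Qed.

Lemma has_sum_twisted_term T :
  has_sum (eis_term_all qs2 e1 e2 k (twisted_point q2 qs2 a b z) s) T ->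
  has_sum (twisted_term e1 e2 q2 qs2 k z s a b) (e1 a * e2 b * / cpowR (IZR (a * b)) s * T)%C.
Proof.
  intros HT.
  refine (has_sum_reindex _ _ (fun j => (a * fst j, b * snd j)%Z) (fun i => (fst i / a, snd i / b)%Z)
    _ _ _ (has_sum_scal _ _ _ HT)).
  - intros [c' d'] _. cbn [fst snd]. rewrite !(Z.mul_comm a), !(Z.mul_comm b), !Z.div_mul by lia.
    split; auto. unfold twisted_term. cbn [fst snd].
    rewrite !Z.rem_mul, !Z.div_mul by lia. reflexivity.
  - intros [c d] Hf. unfold twisted_term in Hf |- *. cbn [fst snd] in Hf |- *.
    destruct (Z.eqb_spec (Z.rem c a) 0) as [E1|]; [|exfalso; apply Hf; reflexivity].
    destruct (Z.eqb_spec (Z.rem d b) 0) as [E2|]; [|exfalso; apply Hf; reflexivity].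
    apply Z.rem_divide in E1 as [c' ->]; [|lia]. apply Z.rem_divide in E2 as [d' ->]; [|lia].
    rewrite !Z.div_mul by lia. split; [f_equal; ring | reflexivity].
Qed.

End Twist.

Lemma divsum_0 q : divsum q (fun _ => RtoC 0) = RtoC 0.
Proof. rewrite divsum_sumC. apply sumC_eq0. auto. Qed.

Lemma eis_summand_induced q1 q2 qs1 qs2 chi1 chi2 chis1 chis2 k z s c d :
  induced_by q1 chi1 qs1 chis1 -> induced_by q2 chi2 qs2 chis2 ->
  eis_summand q2 chi1 chi2 k z s c d
  = ((if (Z.gcd c q1 =? 1)%Z then RtoC 1 else RtoC 0) * (if (Z.gcd d q2 =? 1)%Z then RtoC 1 else RtoC 0)
     * eis_summand q2 chis1 chis2 k z s c d)%C.
Proof.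
  intros [_ [_ [_ I1]]] [_ [_ [_ I2]]]. unfold eis_summand. rewrite I1, I2.
  destruct (Z.gcd c q1 =? 1)%Z, (Z.gcd d q2 =? 1)%Z; ring.
Qed.

Lemma twisted_term_ndvd e1 e2 q2 qs2 k z s a b c d :
  (Z.rem c a <> 0 \/ Z.rem d b <> 0)%Z -> twisted_term e1 e2 q2 qs2 k z s a b (c, d) = RtoC 0.
Proof.
  unfold twisted_term. cbn [fst snd].
  intros [E|E]; apply Z.eqb_neq in E; rewrite E; [|rewrite Bool.andb_false_r]; reflexivity.
Qed.

Lemma eis_term_all_moebius q1 q2 qs1 qs2 chi1 chi2 chis1 chis2 k z s p :
  induced_by q1 chi1 qs1 chis1 -> induced_by q2 chi2 qs2 chis2 -> 0 < Im z ->
  eis_term_all q2 chi1 chi2 k z s p =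
  divsum q1 (fun a => divsum q2 (fun b =>
    (RtoC (IZR (moebius a)) * RtoC (IZR (moebius b)) * twisted_term chis1 chis2 q2 qs2 k z s a b p)%C)).
Proof.
  intros Hi1 Hi2 Hy.
  pose proof Hi1 as [[Hq1 _] [[_ [_ [Ms1 _]]] _]].
  pose proof Hi2 as [[Hq2 _] [[Hqs2 [_ [Ms2 _]]] _]].
  destruct p as [c d].
  destruct (classic (c = 0 /\ d = 0)%Z) as [[-> ->]|Hcd].
  { transitivity (divsum q1 (fun _ => RtoC 0)); [rewrite divsum_0; reflexivity|].
    apply divsum_ext; auto. intros a Ha _.
    rewrite <- (divsum_0 q2). apply divsum_ext; auto. intros b Hb _.
    unfold twisted_term, eis_term_all. cbn [fst snd].
    rewrite !Z.rem_0_l, !Z.div_0_l, Z.eqb_refl by lia. cbn [andb]. ring. }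
  set (X := eis_summand q2 chis1 chis2 k z s c d).
  set (A := fun a => if (Z.rem c a =? 0)%Z then RtoC (IZR (moebius a)) else RtoC 0).
  set (B := fun b => if (Z.rem d b =? 0)%Z then RtoC (IZR (moebius b)) else RtoC 0).
  transitivity (divsum q1 (fun a => divsum q2 (fun b => B b * (A a * X))))%C.
  - rewrite (divsum_ext q1 _ (fun a => A a * (divsum q2 B * X))%C) by
      (auto; intros a _ _; rewrite divsum_scal; ring).
    rewrite divsum_scal, Cmult_assoc. unfold A, B.
    rewrite !sum_moebius_common_divisors by auto.
    rewrite eis_term_all_nz by auto. apply (eis_summand_induced q1 q2 qs1 qs2); auto.
  - apply divsum_ext; auto. intros a Ha _. apply divsum_ext; auto. intros b Hb _.
    unfold A, B.
    destruct (Z.eqb_spec (Z.rem c a) 0) as [Ec|Ec], (Z.eqb_spec (Z.rem d b) 0) as [Ed|Ed];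
      try (rewrite twisted_term_ndvd by tauto; ring).
    apply Z.rem_divide in Ec, Ed; try lia.
    rewrite (twisted_term_eq q2 qs2 a b z s Ha Hb Hq2 Hqs2 Hy chis1 chis2 k Ms1 Ms2 c d Ec Ed Hcd).
    unfold X. ring.
Qed.

Lemma has_sum_eis_term_all_moebius q1 q2 qs1 qs2 chi1 chi2 chis1 chis2 k z s (T : Z -> Z -> C) :
  induced_by q1 chi1 qs1 chis1 -> induced_by q2 chi2 qs2 chis2 -> 0 < Im z ->
  (forall a b, (0 < a)%Z -> (0 < b)%Z ->
     has_sum (eis_term_all qs2 chis1 chis2 k (twisted_point q2 qs2 a b z) s) (T a b)) ->
  has_sum (eis_term_all q2 chi1 chi2 k z s)
    (divsum q1 (fun a => divsum q2 (fun b =>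
       (RtoC (IZR (moebius a)) * RtoC (IZR (moebius b))
        * (chis1 a * chis2 b * / cpowR (IZR (a * b)) s * T a b))%C))).
Proof.
  intros Hi1 Hi2 Hy HT.
  pose proof Hi1 as [[Hq1 _] [[_ [_ [Ms1 _]]] _]].
  pose proof Hi2 as [[Hq2 _] [[Hqs2 [_ [Ms2 _]]] _]].
  eapply has_sum_ext; [intros p; symmetry;
    apply (eis_term_all_moebius q1 q2 qs1 qs2 chi1 chi2 chis1 chis2); auto|].
  apply has_sum_divsum; auto. intros a Ha _.
  apply has_sum_divsum; auto. intros b Hb _.
  apply has_sum_scal, has_sum_twisted_term; auto.
Qed.

Lemma sumR_inv_sq_le N :
  sumR (fun n => / (INR (S n) * INR (S n))) (seq 1 (S N)) <= 3 / 4 - / INR (S (S N)).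
Proof.
  induction N.
  - simpl. replace (1 + 1) with 2 by ring. lra.
  - rewrite (seq_S (S N)), sumR_app. cbn [sumR]. rewrite Rplus_0_r.
    replace (1 + S N)%nat with (S (S N)) by lia.
    assert (H2 : 2 <= INR (S (S N))) by (rewrite !S_INR; pose proof (pos_INR N); lra).
    rewrite (S_INR (S (S N))). set (x := INR (S (S N))) in *.
    assert (/ ((x + 1) * (x + 1)) <= / x - / (x + 1)).
    { replace (/ x - / (x + 1)) with (/ (x * (x + 1))) by (field; lra).
      apply Rinv_le_contravar; nra. }
    lra.
Qed.

Lemma Cmod_dirichlet_term_le f s n : 2 <= Re s -> (forall m, Cmod (f m) <= 1) ->
  Cmod (dirichlet_term f s n) <= / (INR (S n) * INR (S n)).
Proof.
  intros Hs Hf. unfold dirichlet_term.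
  assert (Hn : 1 <= INR (S n)) by (apply (le_INR 1); lia).
  rewrite Cmod_mult, Cmod_inv, Cmod_cpowR by apply cpowR_neq0.
  rewrite <- Rpower_2 by lra.
  pose proof (Rle_Rpower _ _ _ Hn Hs).
  pose proof (Rpower_pos (INR (S n)) 2). specialize (Hf (Z.of_nat (S n))).
  pose proof (Cmod_ge_0 (f (Z.of_nat (S n)))).
  apply Rle_trans with (1 * / Rpower (INR (S n)) (Re s)).
  - apply Rmult_le_compat_r; [left; apply Rinv_0_lt_compat, Rpower_pos | auto].
  - rewrite Rmult_1_l. apply Rinv_le_contravar; auto.
Qed.

(* |L - 1| <= sum_{n >= 2} n^-2 <= 3/4 *)
Lemma dirichlet_sum_neq0 f s L : 2 <= Re s -> f 1%Z = RtoC 1 -> (forall n, Cmod (f n) <= 1) ->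
  has_sum (dirichlet_term f s) L -> L <> RtoC 0.
Proof.
  intros Hs H1 Hf HL EL.
  enough (Cmod (L - 1)%C <= 3 / 4) by (rewrite EL, Cmod_sub_sym in H;
    replace (1 - 0)%C with (RtoC 1) in H by ring; rewrite Cmod_1 in H; lra).
  apply le_epsilon. intros eps He. destruct (HL eps He) as [l0 H0].
  set (N := S (list_max l0)).
  specialize (H0 (seq 0 (S N)) (seq_NoDup _ _)).
  assert (Hin : incl l0 (seq 0 (S N))).
  { intros x Hx. apply in_seq. pose proof (In_le_list_max l0 x Hx). unfold N. lia. }
  specialize (H0 Hin). cbn [seq sumC] in H0. rewrite <- seq_shift, sumC_map in H0.
  replace (dirichlet_term f s 0) with (RtoC 1) in H0
    by (unfold dirichlet_term; simpl; rewrite H1, cpowR_1; field).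
  assert (Htail : Cmod (sumC (fun n => dirichlet_term f s (S n)) (seq 0 N)) <= 3 / 4).
  { eapply Rle_trans; [apply Cmod_sumC_le|].
    eapply Rle_trans; [apply sumR_le; intros n; apply Cmod_dirichlet_term_le; auto|].
    rewrite <- (sumR_map (fun n => / (INR (S n) * INR (S n))) S), seq_shift. unfold N.
    pose proof (sumR_inv_sq_le (list_max l0)).
    assert (0 < / INR (S (S (list_max l0)))) by (apply Rinv_0_lt_compat, lt_0_INR; lia). lra. }
  set (T := sumC (fun n => dirichlet_term f s (S n)) (seq 0 N)) in *.
  replace (L - 1)%C with (T - (1 + T - L))%C by ring.
  eapply Rle_trans; [apply Cmod_sub_triangle with (b := RtoC 0)|].
  replace (T - 0)%C with T by ring. replace (0 - (1 + T - L))%C with (- (1 + T - L))%C by ring.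
  rewrite Cmod_opp. lra.
Qed.

Lemma has_sum_Lfun f s : summable (dirichlet_term f s) -> has_sum (dirichlet_term f s) (Lfun s f).
Proof.
  intros Hf. destruct (summable_has_sum _ Hf) as [L HL]. rewrite (Lfun_of_has_sum _ _ _ HL). auto.
Qed.

Lemma has_sum_Eis r e1 e2 k z s : 0 < Im z -> (1 <= r)%Z -> 1 < Re s ->
  (forall n, Cmod (e1 n) <= 1) -> (forall n, Cmod (e2 n) <= 1) ->
  has_sum (fun p => eis_term r e1 e2 k z s (fst p) (snd p)) (RtoC 2 * Eis r e1 e2 k z s)%C.
Proof.
  intros Hy Hr Hs B1 B2.
  destruct (summable_has_sum _ (eis_term_summable r e1 e2 k z s Hy Hr Hs B1 B2)) as [S HS].
  rewrite (Eis_of_has_sum _ _ _ _ _ _ _ HS).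
  replace (RtoC 2 * (RtoC (/ 2) * S))%C with S; auto.
  rewrite Cmult_assoc, <- RtoC_mult, Rinv_r, Cmult_1_l; auto; lra.
Qed.

Lemma divsum2_scal q1 q2 (F : Z -> Z -> C) X : (0 < q1)%Z ->
  divsum q1 (fun a => divsum q2 (fun b => F a b * X))%C = (divsum q1 (fun a => divsum q2 (F a)) * X)%C.
Proof. intros Hq. rewrite <- divsum_scal. apply divsum_ext; auto. intros. apply divsum_scal. Qed.

Lemma dirichlet_char_mult_le1 q1 q2 e1 e2 : dirichlet_char q1 e1 -> dirichlet_char q2 e2 ->
  forall n, Cmod (e1 n * e2 n)%C <= 1.
Proof. intros D1 D2 n. apply Cmod_mult_le1; eapply char_norm_le1; eauto. Qed.

Lemma has_sum_L_series q1 q2 e1 e2 s : dirichlet_char q1 e1 -> dirichlet_char q2 e2 -> 1 < Re s ->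
  has_sum (dirichlet_term (fun n => e1 n * e2 n)%C (RtoC 2 * s)%C)
          (Lfun (RtoC 2 * s)%C (fun n => e1 n * e2 n)%C).
Proof.
  intros D1 D2 Hs. apply has_sum_Lfun, dirichlet_term_summable.
  - rewrite Re_double; lra.
  - eapply dirichlet_char_mult_le1; eauto.
Qed.

Lemma L_series_neq0 q1 q2 e1 e2 s : dirichlet_char q1 e1 -> dirichlet_char q2 e2 -> 1 < Re s ->
  Lfun (RtoC 2 * s)%C (fun n => e1 n * e2 n)%C <> RtoC 0.
Proof.
  intros D1 D2 Hs. eapply dirichlet_sum_neq0; [| | |eapply has_sum_L_series; eauto].
  - rewrite Re_double; lra.
  - destruct D1 as [_ [-> _]], D2 as [_ [-> _]]. ring.
  - eapply dirichlet_char_mult_le1; eauto.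
Qed.

Lemma has_sum_eis_term_all r q1 q2 e1 e2 k z s :
  dirichlet_char q1 e1 -> dirichlet_char q2 e2 -> (1 <= r)%Z -> 0 < Im z -> 1 < Re s ->
  has_sum (eis_term_all r e1 e2 k z s)
    (Lfun (RtoC 2 * s)%C (fun n => e1 n * e2 n)%C * (RtoC 2 * Eis r e1 e2 k z s))%C.
Proof.
  intros D1 D2 Hr Hy Hs.
  pose proof (char_norm_le1 _ _ D1) as B1. pose proof (char_norm_le1 _ _ D2) as B2.
  apply eis_term_all_factorization; auto.
  - apply D1.
  - apply D2.
  - eapply has_sum_L_series; eauto.
  - apply has_sum_Eis; auto.
Qed.

Theorem lemma5p1 (k : Z) (q1 q2 qs1 qs2 : Z) (chi1 chi2 chis1 chis2 : Z -> C) (z s : C) :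
  primitive_char qs1 chis1 -> primitive_char qs2 chis2 ->
  induced_by q1 chi1 qs1 chis1 -> induced_by q2 chi2 qs2 chis2 ->
  Cmult (chi1 (-1)%Z) (chi2 (-1)%Z) = cpowZ (RtoC (-1)) k ->
  (0 < Im z)%R -> (1 < Re s)%R ->
  Eis q2 chi1 chi2 k z s =
  Cmult (Cdiv (Lfun (Cmult (RtoC 2) s) (fun n => Cmult (chis1 n) (chis2 n)))
              (Lfun (Cmult (RtoC 2) s) (fun n => Cmult (chi1 n) (chi2 n))))
    (divsum q1 (fun a => divsum q2 (fun b =>
       Cmult (Cdiv (Cmult (Cmult (RtoC (IZR (moebius a))) (chis1 a))
                          (Cmult (RtoC (IZR (moebius b))) (chis2 b)))
                   (cpowR (IZR (a * b)) s))
             (Eis qs2 chis1 chis2 k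
                (Cmult (RtoC (IZR (a * q2) / IZR (b * qs2))) z) s)))).
Proof.
  intros _ _ Hi1 Hi2 _ Hy Hs.
  pose proof Hi1 as [D1 [Ds1 _]]. pose proof Hi2 as [D2 [Ds2 _]].
  assert (Hq2 : (0 < q2)%Z) by apply D2. assert (Hqs2 : (0 < qs2)%Z) by apply Ds2.
  pose proof (has_sum_eis_term_all q2 q1 q2 chi1 chi2 k z s D1 D2 ltac:(lia) Hy Hs) as F1.
  pose proof (has_sum_eis_term_all_moebius q1 q2 qs1 qs2 chi1 chi2 chis1 chis2 k z s _ Hi1 Hi2 Hy
    (fun a b Ha Hb => has_sum_eis_term_all qs2 qs1 qs2 chis1 chis2 k _ s Ds1 Ds2 ltac:(lia)
       (Im_twisted_point_pos q2 qs2 a b z Ha Hb Hq2 Hqs2 Hy) Hs)) as F2.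
  set (L := Lfun (RtoC 2 * s)%C (fun n => chi1 n * chi2 n)%C) in *.
  set (Ls := Lfun (RtoC 2 * s)%C (fun n => chis1 n * chis2 n)%C) in *.
  match goal with |- _ = (_ * ?D)%C =>
    assert (Hkey : (L * (RtoC 2 * Eis q2 chi1 chi2 k z s))%C = (D * (RtoC 2 * Ls))%C) end.
  { rewrite (has_sum_unique _ _ _ F1 F2), <- divsum2_scal by apply D1.
    apply divsum_ext; [apply D1|]. intros a _ _. apply divsum_ext; auto. intros b _ _.
    unfold Cdiv, twisted_point. ring. }
  assert (HL : L <> RtoC 0) by (eapply L_series_neq0; eauto).
  assert (H2 : RtoC 2 <> RtoC 0) by (intros E; apply RtoC_inj in E; lra).
  transitivity ((L * (RtoC 2 * Eis q2 chi1 chi2 k z s)) / (RtoC 2 * L))%C; [field; auto|].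
  rewrite Hkey. field. auto.
Qed.
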